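(* Let $A$ be a nonempty set and let $\mathrm{FVL}(A)$ be as described in the context. Let $\mathcal N$ be the set of all lattice seminorms $\nu$ on $\mathrm{FVL}(A)$ such that $\nu(\delta_a)\le 1$ for every $a\in A$, and for $f\in\mathrm{FVL}(A)$ put $\|f\|=\sup_{\nu\in\mathcal N}\nu(f)$. Then: (i) $\|f\|<\infty$ for every $f\in\mathrm{FVL}(A)$, and $\|\cdot\|$ is a lattice norm on $\mathrm{FVL}(A)$ belonging to $\mathcal N$; consequently it is the greatest lattice seminorm $\nu$ on $\mathrm{FVL}(A)$ with $\nu(\delta_a)\le 1$ for all $a\in A$. (ii) Let $X$ be the completion of $(\mathrm{FVL}(A),\|\cdot\|)$ (a Banach lattice containing $A$ via $a\mapsto\delta_a$). Then $X$ is a free Banach lattice over $A$: for every Banach lattice $Y$ and every function $\varphi\colon A\to Y$ with $\sup_{a\in A}\|\varphi(a)\|\le 1$, there exists a unique lattice homomorphism $\tilde\varphi\colon X\to Y$ with $\tilde\varphi(\delta_a)=\varphi(a)$ for all $a\in A$ and $\|\tilde\varphi\|\le 1$. Hence $X$ is (lattice isometric, via an isometry fixing $A$, to) $\mathrm{FBL}(A)$.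
   Context: For a set $A$ and $a\in A$, let $\delta_a\colon\mathbb R^A\to\mathbb R$ be the evaluation map $\delta_a(x)=x(a)$. The space $\mathbb R^{\mathbb R^A}$ of all real functions on $\mathbb R^A$ is a vector lattice under pointwise operations and order. $\mathrm{FVL}(A)$ denotes the vector sublattice of $\mathbb R^{\mathbb R^A}$ generated by $\{\delta_a: a\in A\}$; $A$ is identified with $\{\delta_a\}$. (This is the free vector lattice over $A$: every map from $A$ to a vector lattice $Y$ extends uniquely to a lattice homomorphism $\mathrm{FVL}(A)\to Y$.) A lattice seminorm on a vector lattice $L$ is a seminorm $\nu$ such that $|f|\le|g|$ implies $\nu(f)\le\nu(g)$; a lattice norm is a lattice seminorm that is a norm. A Banach lattice $X$ containing a set $A$ is a free Banach lattice over $A$, denoted $\mathrm{FBL}(A)$ (unique up to lattice isometry fixing $A$), if every function $\varphi\colon A\to Y$ into a Banach lattice $Y$ with $\sup_{a\in A}\|\varphi(a)\|\le1$ extends uniquely to a lattice homomorphism $\tilde\varphi\colon X\to Y$ with $\|\tilde\varphi\|\le 1$. *)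

From Stdlib Require Import Reals.
Open Scope R_scope.

Definition fn (A : Type) := (A -> R) -> R.

Definition delta {A : Type} (a : A) : fn A := fun x => x a.

Definition fzero {A : Type} : fn A := fun _ => 0.
Definition fadd {A : Type} (f g : fn A) : fn A := fun x => f x + g x.
Definition fscal {A : Type} (c : R) (f : fn A) : fn A := fun x => c * f x.
Definition fmax {A : Type} (f g : fn A) : fn A := fun x => Rmax (f x) (g x).
Definition fmin {A : Type} (f g : fn A) : fn A := fun x => Rmin (f x) (g x).

Definition is_vector_sublattice {A : Type} (S : fn A -> Prop) : Prop :=
  S fzero /\
  (forall f g, S f -> S g -> S (fadd f g)) /\
  (forall c f, S f -> S (fscal c f)) /\
  (forall f g, S f -> S g -> S (fmax f g)) /\
  (forall f g, S f -> S g -> S (fmin f g)).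

Definition FVL {A : Type} (f : fn A) : Prop :=
  forall S : fn A -> Prop, is_vector_sublattice S ->
    (forall a, S (delta a)) -> S f.

Definition fabs_le {A : Type} (f g : fn A) : Prop :=
  forall x, Rabs (f x) <= Rabs (g x).

(* Lattice seminorm on FVL(A) (only its values on FVL(A) matter). *)
Definition lattice_seminorm {A : Type} (nu : fn A -> R) : Prop :=
  (forall f g, FVL f -> FVL g -> nu (fadd f g) <= nu f + nu g) /\
  (forall c f, FVL f -> nu (fscal c f) = Rabs c * nu f) /\
  (forall f g, FVL f -> FVL g -> fabs_le f g -> nu f <= nu g).

Definition lattice_norm {A : Type} (nu : fn A -> R) : Prop :=
  lattice_seminorm nu /\ (forall f, FVL f -> nu f = 0 -> f = fzero).

Definition in_calN {A : Type} (nu : fn A -> R) : Prop :=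
  lattice_seminorm nu /\ (forall a, nu (delta a) <= 1).

Record BanachLattice : Type := {
  bl_car :> Type;
  bl_zero : bl_car;
  bl_add : bl_car -> bl_car -> bl_car;
  bl_opp : bl_car -> bl_car;
  bl_scal : R -> bl_car -> bl_car;
  bl_le : bl_car -> bl_car -> Prop;
  bl_join : bl_car -> bl_car -> bl_car;
  bl_norm : bl_car -> R;
  bl_addA : forall x y z, bl_add x (bl_add y z) = bl_add (bl_add x y) z;
  bl_addC : forall x y, bl_add x y = bl_add y x;
  bl_add0 : forall x, bl_add x bl_zero = x;
  bl_addN : forall x, bl_add x (bl_opp x) = bl_zero;
  bl_scal1 : forall x, bl_scal 1 x = x;
  bl_scalA : forall a b x, bl_scal a (bl_scal b x) = bl_scal (a * b) x;
  bl_scalDr : forall a x y, bl_scal a (bl_add x y) = bl_add (bl_scal a x) (bl_scal a y);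
  bl_scalDl : forall a b x, bl_scal (a + b) x = bl_add (bl_scal a x) (bl_scal b x);
  bl_le_refl : forall x, bl_le x x;
  bl_le_trans : forall x y z, bl_le x y -> bl_le y z -> bl_le x z;
  bl_le_antisym : forall x y, bl_le x y -> bl_le y x -> x = y;
  bl_le_add : forall x y z, bl_le x y -> bl_le (bl_add x z) (bl_add y z);
  bl_le_scal : forall c x y, 0 <= c -> bl_le x y -> bl_le (bl_scal c x) (bl_scal c y);
  bl_join_l : forall x y, bl_le x (bl_join x y);
  bl_join_r : forall x y, bl_le y (bl_join x y);
  bl_join_least : forall x y z, bl_le x z -> bl_le y z -> bl_le (bl_join x y) z;
  bl_norm_triangle : forall x y, bl_norm (bl_add x y) <= bl_norm x + bl_norm y;
  bl_norm_scal : forall c x, bl_norm (bl_scal c x) = Rabs c * bl_norm x;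
  bl_norm_eq0 : forall x, bl_norm x = 0 -> x = bl_zero;
  (* lattice norm: |x| <= |y| implies ||x|| <= ||y||, |x| = x \/ -x *)
  bl_norm_lattice : forall x y,
    bl_le (bl_join x (bl_opp x)) (bl_join y (bl_opp y)) -> bl_norm x <= bl_norm y;
  bl_complete : forall u : nat -> bl_car,
    (forall eps, 0 < eps -> exists N, forall n m, (N <= n)%nat -> (N <= m)%nat ->
        bl_norm (bl_add (u n) (bl_opp (u m))) < eps) ->
    exists l, forall eps, 0 < eps -> exists N, forall n, (N <= n)%nat ->
        bl_norm (bl_add (u n) (bl_opp l)) < eps
}.

Arguments bl_zero {_}.
Arguments bl_add {_}.
Arguments bl_opp {_}.
Arguments bl_scal {_}.
Arguments bl_le {_}.
Arguments bl_join {_}.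
Arguments bl_norm {_}.

Definition lattice_hom {X Y : BanachLattice} (T : X -> Y) : Prop :=
  (forall x y, T (bl_add x y) = bl_add (T x) (T y)) /\
  (forall c x, T (bl_scal c x) = bl_scal c (T x)) /\
  (forall x y, T (bl_join x y) = bl_join (T x) (T y)).

Definition norm_le1 {X Y : BanachLattice} (T : X -> Y) : Prop :=
  forall x, bl_norm (T x) <= bl_norm x.

Definition is_FBL {A : Type} (X : BanachLattice) (i : A -> X) : Prop :=
  forall (Y : BanachLattice) (phi : A -> Y),
    (forall a, bl_norm (phi a) <= 1) ->
    exists T : X -> Y,
      (lattice_hom T /\ norm_le1 T /\ (forall a, T (i a) = phi a)) /\
      (forall T' : X -> Y,
         lattice_hom T' /\ norm_le1 T' /\ (forall a, T' (i a) = phi a) ->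
         forall x, T' x = T x).

Definition is_completion {A : Type} (nu : fn A -> R) (X : BanachLattice)
    (J : fn A -> X) : Prop :=
  (forall f g, FVL f -> FVL g -> J (fadd f g) = bl_add (J f) (J g)) /\
  (forall c f, FVL f -> J (fscal c f) = bl_scal c (J f)) /\
  (forall f g, FVL f -> FVL g -> J (fmax f g) = bl_join (J f) (J g)) /\
  (forall f, FVL f -> bl_norm (J f) = nu f) /\
  (forall (x : X) eps, 0 < eps ->
     exists f, FVL f /\ bl_norm (bl_add x (bl_opp (J f))) < eps).

From Stdlib Require Import Reals Lra Lia ZArith List ClassicalEpsilon FunctionalExtensionality.
Import ListNotations.
Open Scope R_scope.

(* Proof strategy.
   - Every element of FVL(A) is the function x |-> t(x) of a lattice-linear
     term t (variables, 0, +, real multiples, binary join).  A seminorm nu in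
     N satisfies nu(t) <= K(t) for an explicit size K of t, so the supremum
     ||f|| exists; it inherits the seminorm axioms, lies in N, and is a norm
     because |g(y)| with y in [-1,1]^A is a member of N.
   - Transfer principle: a term t with t(x) <= 0 for every x in R^A evaluates
     to an element <= 0 in every Banach lattice.  Write t as a join of meets
     of linear forms; for each meet the forms have no common strict
     positivity point, so Fourier-Motzkin elimination yields a positive
     combination of them equal to the zero form, and evaluating that
     combination in the lattice bounds the meet by 0.
   - Hence phi : A -> Y extends to a well-defined lattice homomorphism hat
     on FVL(A) (evaluation of terms), and f |-> ||hat f|| is in N, so hat is
     1-Lipschitz for ||.||.  It extends to the completion X through the
     relation "x and y are simultaneous limits of J f and hat f", which is
     functional, total (Y is complete) and compatible with the operations
     (Birkhoff's inequality for joins).  A second lattice homomorphism of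
     norm <= 1 agreeing with phi on A agrees with hat on FVL(A), hence on X
     by density. *)

(* Arithmetic of vector lattices, stated in a Banach lattice Y.  Meets are
   defined by x /\ y = -((-x) \/ (-y)); distributivity is needed to push
   joins through meets when normalising lattice terms. *)
Section VectorLatticeAlgebra.
Variable Y : BanachLattice.
Local Infix "+." := (@bl_add Y) (at level 50, left associativity).
Local Notation "-. x" := (@bl_opp Y x) (at level 35, right associativity).
Local Infix "*." := (@bl_scal Y) (at level 40, left associativity).
Local Infix "<=." := (@bl_le Y) (at level 70).
Local Infix "\/." := (@bl_join Y) (at level 45, left associativity).
Local Notation zY := (@bl_zero Y).

Lemma add0l (x : Y) : zY +. x = x.
Proof. rewrite bl_addC; apply bl_add0. Qed.
Lemma addNl (x : Y) : -. x +. x = zY.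
Proof. rewrite bl_addC; apply bl_addN. Qed.
Lemma add_cancel_r (x y z : Y) : x +. z = y +. z -> x = y.
Proof.
  intro H. rewrite <- (bl_add0 _ x), <- (bl_add0 _ y), <- (bl_addN _ z), !bl_addA, H.
  reflexivity.
Qed.
Lemma add_cancel_l (x y z : Y) : z +. x = z +. y -> x = y.
Proof. rewrite (bl_addC _ z x), (bl_addC _ z y). apply add_cancel_r. Qed.
Lemma opp_unique (x y : Y) : x +. y = zY -> y = -. x.
Proof. intro H. apply (add_cancel_l _ _ x). rewrite H, bl_addN. reflexivity. Qed.
Lemma oppK (x : Y) : -. -. x = x.
Proof. symmetry. apply opp_unique. apply addNl. Qed.
Lemma opp_add (x y : Y) : -. (x +. y) = -. x +. -. y.
Proof.
  symmetry. apply opp_unique.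
  rewrite (bl_addC _ (-. x)), bl_addA, <- (bl_addA _ x), bl_addN, bl_add0, bl_addN.
  reflexivity.
Qed.
Lemma opp0 : -. zY = zY.
Proof. symmetry; apply opp_unique; apply bl_add0. Qed.
Lemma scal0 (x : Y) : 0 *. x = zY.
Proof.
  apply (add_cancel_l _ _ (0 *. x)). rewrite bl_add0, <- bl_scalDl, Rplus_0_r. reflexivity.
Qed.
Lemma scal_zero (c : R) : c *. zY = zY.
Proof.
  apply (add_cancel_l _ _ (c *. zY)). rewrite bl_add0, <- bl_scalDr, bl_add0. reflexivity.
Qed.
Lemma scalN1 (x : Y) : (-1) *. x = -. x.
Proof.
  apply opp_unique. rewrite <- (bl_scal1 _ x) at 1. rewrite <- bl_scalDl.
  replace (1 + -1) with 0 by ring. apply scal0.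
Qed.
Lemma scal_opp (c : R) (x : Y) : c *. (-. x) = -. (c *. x).
Proof. rewrite <- !scalN1, !bl_scalA, Rmult_comm. reflexivity. Qed.
Lemma scalNl (c : R) (x : Y) : (- c) *. x = -. (c *. x).
Proof. rewrite <- scalN1, bl_scalA. f_equal. ring. Qed.
Lemma scal_sub (c : R) (x y : Y) : c *. (x +. -. y) = c *. x +. -. (c *. y).
Proof. rewrite bl_scalDr, scal_opp. reflexivity. Qed.

Lemma le_add_l (x y z : Y) : x <=. y -> z +. x <=. z +. y.
Proof. intro H. rewrite !(bl_addC _ z). apply bl_le_add, H. Qed.
Lemma le_add2 (a b c d : Y) : a <=. b -> c <=. d -> a +. c <=. b +. d.
Proof.
  intros H1 H2. apply bl_le_trans with (b +. c). apply bl_le_add, H1. apply le_add_l, H2.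
Qed.
Lemma le_add_cancel (x y z : Y) : x +. z <=. y +. z -> x <=. y.
Proof.
  intro H. apply (bl_le_add _ _ _ (-. z)) in H.
  rewrite <- !bl_addA, bl_addN, !bl_add0 in H. exact H.
Qed.
Lemma le_of_sub_nonpos (x y : Y) : x +. -. y <=. zY -> x <=. y.
Proof. intro H. apply (le_add_cancel _ _ (-. y)). rewrite bl_addN. exact H. Qed.
Lemma le_sub_of_add_le (x z w : Y) : x +. z <=. w -> x <=. w +. -. z.
Proof.
  intro H. apply (bl_le_add _ _ _ (-. z)) in H. rewrite <- bl_addA, bl_addN, bl_add0 in H.
  exact H.
Qed.
Lemma add_le_of_le_sub (x z w : Y) : x <=. w +. -. z -> x +. z <=. w.
Proof.
  intro H. apply (bl_le_add _ _ _ z) in H. rewrite <- bl_addA, addNl, bl_add0 in H. exact H.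
Qed.
Lemma sub_le_of_le_add (a b w : Y) : a <=. b +. w -> a +. -. w <=. b.
Proof.
  intro H. apply (bl_le_add _ _ _ (-. w)) in H. rewrite <- bl_addA, bl_addN, bl_add0 in H.
  exact H.
Qed.
Lemma le_add_of_sub_le (a b w : Y) : a +. -. w <=. b -> a <=. b +. w.
Proof.
  intro H. apply (bl_le_add _ _ _ w) in H. rewrite <- bl_addA, addNl, bl_add0 in H. exact H.
Qed.
Lemma le_opp (x y : Y) : x <=. y -> -. y <=. -. x.
Proof.
  intro H. apply (le_add_cancel _ _ (x +. y)).
  rewrite (bl_addC _ x y) at 1. rewrite bl_addA, addNl, add0l.
  rewrite bl_addA, addNl, add0l. exact H.
Qed.
Lemma le_scal_inv (c : R) (x y : Y) : 0 < c -> c *. x <=. c *. y -> x <=. y.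
Proof.
  intros Hc H. apply (bl_le_scal _ (/ c)) in H; [|left; apply Rinv_0_lt_compat, Hc].
  rewrite !bl_scalA, Rinv_l, !bl_scal1 in H; [exact H | lra].
Qed.

Lemma join_comm (x y : Y) : x \/. y = y \/. x.
Proof. apply bl_le_antisym; apply bl_join_least; auto using bl_join_l, bl_join_r. Qed.
Lemma join_assoc (x y z : Y) : x \/. (y \/. z) = (x \/. y) \/. z.
Proof.
  apply bl_le_antisym; repeat apply bl_join_least.
  - apply bl_le_trans with (x \/. y); apply bl_join_l.
  - apply bl_le_trans with (x \/. y); [apply bl_join_r | apply bl_join_l].
  - apply bl_join_r.
  - apply bl_join_l.
  - apply bl_le_trans with (y \/. z); [apply bl_join_l | apply bl_join_r].
  - apply bl_le_trans with (y \/. z); apply bl_join_r.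
Qed.
Lemma join_idem (x : Y) : x \/. x = x.
Proof. apply bl_le_antisym. apply bl_join_least; apply bl_le_refl. apply bl_join_l. Qed.
Lemma join_mono (a b c d : Y) : a <=. b -> c <=. d -> a \/. c <=. b \/. d.
Proof.
  intros H1 H2. apply bl_join_least.
  apply bl_le_trans with b; auto using bl_join_l.
  apply bl_le_trans with d; auto using bl_join_r.
Qed.
Lemma join_add (x y z : Y) : (x \/. y) +. z = (x +. z) \/. (y +. z).
Proof.
  apply bl_le_antisym.
  - apply (le_add_cancel _ _ (-. z)). rewrite <- bl_addA, bl_addN, bl_add0.
    apply bl_join_least; apply le_sub_of_add_le; [apply bl_join_l | apply bl_join_r].
  - apply bl_join_least; apply bl_le_add; [apply bl_join_l | apply bl_join_r].
Qed.
Lemma add_join (x y z : Y) : z +. (x \/. y) = (z +. x) \/. (z +. y).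
Proof. rewrite !(bl_addC _ z). apply join_add. Qed.
Lemma join_scal (c : R) (x y : Y) : 0 <= c -> c *. (x \/. y) = (c *. x) \/. (c *. y).
Proof.
  intros [Hc|<-]; [|rewrite !scal0, join_idem; reflexivity].
  assert (Hic : 0 <= / c) by (left; apply Rinv_0_lt_compat, Hc).
  assert (undo : forall z : Y, z = / c *. (c *. z))
    by (intro z; rewrite bl_scalA, Rinv_l, bl_scal1 by lra; reflexivity).
  apply bl_le_antisym.
  - apply (le_scal_inv (/ c)); [apply Rinv_0_lt_compat, Hc|].
    rewrite <- undo. apply bl_join_least.
    + rewrite (undo x) at 1. apply bl_le_scal; [exact Hic|apply bl_join_l].
    + rewrite (undo y) at 1. apply bl_le_scal; [exact Hic|apply bl_join_r].
  - apply bl_join_least; apply bl_le_scal; auto using bl_join_l, bl_join_r; lra.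
Qed.

Definition meet (x y : Y) : Y := -. ((-. x) \/. (-. y)).
Local Infix "/\." := meet (at level 45, left associativity).
Lemma meet_l (x y : Y) : x /\. y <=. x.
Proof. unfold meet. rewrite <- (oppK x) at 2. apply le_opp, bl_join_l. Qed.
Lemma meet_r (x y : Y) : x /\. y <=. y.
Proof. unfold meet. rewrite <- (oppK y) at 2. apply le_opp, bl_join_r. Qed.
Lemma meet_greatest (x y z : Y) : z <=. x -> z <=. y -> z <=. x /\. y.
Proof.
  intros H1 H2. unfold meet. rewrite <- (oppK z). apply le_opp.
  apply bl_join_least; apply le_opp; assumption.
Qed.
Lemma opp_join (x y : Y) : -. (x \/. y) = (-. x) /\. (-. y).
Proof. unfold meet. rewrite !oppK. reflexivity. Qed.
Lemma opp_meet (x y : Y) : -. (x /\. y) = (-. x) \/. (-. y).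
Proof. unfold meet. rewrite oppK. reflexivity. Qed.
Lemma meet_assoc (x y z : Y) : x /\. (y /\. z) = (x /\. y) /\. z.
Proof. unfold meet. rewrite !oppK, join_assoc. reflexivity. Qed.
Lemma meet_add (x y z : Y) : (x /\. y) +. z = (x +. z) /\. (y +. z).
Proof.
  unfold meet. rewrite <- (oppK z) at 1. rewrite <- opp_add, join_add, !opp_add.
  reflexivity.
Qed.
Lemma add_meet (x y z : Y) : z +. (x /\. y) = (z +. x) /\. (z +. y).
Proof. rewrite !(bl_addC _ z). apply meet_add. Qed.
Lemma meet_scal (c : R) (x y : Y) : 0 <= c -> c *. (x /\. y) = (c *. x) /\. (c *. y).
Proof. intro Hc. unfold meet. rewrite scal_opp, join_scal, !scal_opp by exact Hc. reflexivity. Qed.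
Lemma join_scal_neg (c : R) (x y : Y) : c <= 0 -> c *. (x \/. y) = (c *. x) /\. (c *. y).
Proof.
  intro Hc. remember (- c) as d. replace c with (- d) by lra.
  rewrite !scalNl, join_scal by lra. apply opp_join.
Qed.
Lemma meet_scal_neg (c : R) (x y : Y) : c <= 0 -> c *. (x /\. y) = (c *. x) \/. (c *. y).
Proof.
  intro Hc. remember (- c) as d. replace c with (- d) by lra.
  rewrite !scalNl, meet_scal by lra. apply opp_meet.
Qed.

Lemma meet_eq (x y : Y) : x /\. y = x +. y +. -. (x \/. y).
Proof.
  apply bl_le_antisym.
  - apply le_sub_of_add_le. rewrite add_join. apply bl_join_least.
    + rewrite (bl_addC _ x y). apply bl_le_add, meet_r.
    + apply bl_le_add, meet_l.
  - apply meet_greatest; apply sub_le_of_le_add.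
    + apply le_add_l, bl_join_r.
    + rewrite (bl_addC _ x y). apply le_add_l, bl_join_l.
Qed.

(* Distributivity, via meet_eq: with v the right-hand side and
   W = x \/ y \/ z, both y and z lie below v + W - x. *)
Lemma meet_join_distr (x y z : Y) : x /\. (y \/. z) = (x /\. y) \/. (x /\. z).
Proof.
  set (v := (x /\. y) \/. (x /\. z)).
  set (W := x \/. (y \/. z)).
  apply bl_le_antisym.
  2:{ apply bl_join_least; apply meet_greatest; auto using meet_l.
      apply bl_le_trans with y; [apply meet_r| apply bl_join_l].
      apply bl_le_trans with z; [apply meet_r| apply bl_join_r]. }
  assert (Hy : y <=. v +. W +. -. x).
  { apply le_sub_of_add_le. apply bl_le_trans with (v +. (x \/. y)).
    - apply le_add_of_sub_le. rewrite (bl_addC _ y x), <- meet_eq. apply bl_join_l.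
    - apply le_add_l. unfold W. rewrite join_assoc. apply bl_join_l. }
  assert (Hz : z <=. v +. W +. -. x).
  { apply le_sub_of_add_le. apply bl_le_trans with (v +. (x \/. z)).
    - apply le_add_of_sub_le. rewrite (bl_addC _ z x), <- meet_eq. apply bl_join_r.
    - apply le_add_l. unfold W. apply join_mono. apply bl_le_refl. apply bl_join_r. }
  assert (H := bl_join_least _ _ _ _ Hy Hz).
  rewrite meet_eq. fold W. apply sub_le_of_le_add.
  apply add_le_of_le_sub in H. rewrite bl_addC. exact H.
Qed.
Lemma join_meet_distr (x y z : Y) : x \/. (y /\. z) = (x \/. y) /\. (x \/. z).
Proof.
  rewrite <- (oppK (x \/. (y /\. z))), <- (oppK ((x \/. y) /\. (x \/. z))). f_equal.
  rewrite opp_join, opp_meet, meet_join_distr, opp_meet, !opp_join. reflexivity.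
Qed.
End VectorLatticeAlgebra.

(* Iterated binary operations over nonempty lists: big op d [x1; ...; xn]
   is op x1 (op x2 ... xn), and d only serves for the empty list.
   allpairs h l1 l2 lists all h a b with a in l1 and b in l2; it is how
   sums and meets of joins of meets are multiplied out. *)
Fixpoint bigr {T} (op : T -> T -> T) (x : T) (l : list T) : T :=
  match l with [] => x | y :: l' => op x (bigr op y l') end.
Definition big {T} (op : T -> T -> T) (d : T) (l : list T) : T :=
  match l with [] => d | x :: l' => bigr op x l' end.
Definition allpairs {U V W} (h : U -> V -> W) (l1 : list U) (l2 : list V) : list W :=
  flat_map (fun a => map (h a) l2) l1.

Lemma map_neq_nil {U V} (f : U -> V) l : l <> [] -> map f l <> [].
Proof. destruct l; simpl; congruence. Qed.
Lemma big_cons {T} op (d x : T) l : l <> [] -> big op d (x :: l) = op x (big op d l).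
Proof. destruct l; [congruence|reflexivity]. Qed.
Lemma big_app {T} (op : T -> T -> T) d (Hassoc : forall a b c, op a (op b c) = op (op a b) c)
  l1 l2 : l1 <> [] -> l2 <> [] -> big op d (l1 ++ l2) = op (big op d l1) (big op d l2).
Proof.
  induction l1 as [|x l1 IH]; intros H1 H2; [congruence|].
  destruct l1 as [|y l1].
  - simpl app. rewrite big_cons by exact H2. reflexivity.
  - change ((x :: y :: l1) ++ l2) with (x :: ((y :: l1) ++ l2)).
    rewrite big_cons by (simpl; congruence). rewrite IH by (congruence || assumption).
    rewrite (big_cons _ _ x (y :: l1)) by congruence. apply Hassoc.
Qed.
Lemma big_map {T U} (op : T -> T -> T) (op' : U -> U -> U) d d' (g : T -> U)
  (Hg : forall a b, g (op a b) = op' (g a) (g b)) l :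
  l <> [] -> big op' d' (map g l) = g (big op d l).
Proof.
  induction l as [|x l IH]; intros H; [congruence|].
  destruct l as [|y l]; [reflexivity|].
  simpl map. rewrite big_cons by (simpl; congruence).
  change (g y :: map g l) with (map g (y :: l)). rewrite IH by congruence.
  rewrite (big_cons _ _ x (y :: l)) by congruence. symmetry; apply Hg.
Qed.
Lemma allpairs_neq_nil {U V W} (h : U -> V -> W) l1 l2 :
  l1 <> [] -> l2 <> [] -> allpairs h l1 l2 <> [].
Proof.
  destruct l1 as [|a l1]; [congruence|]. destruct l2 as [|b l2]; [congruence|].
  intros _ _. simpl. discriminate.
Qed.
Lemma in_allpairs {U V W} (h : U -> V -> W) l1 l2 z :
  In z (allpairs h l1 l2) <-> exists a b, In a l1 /\ In b l2 /\ z = h a b.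
Proof.
  unfold allpairs. rewrite in_flat_map. split.
  - intros [a [Ha Hz]]. apply in_map_iff in Hz. destruct Hz as [b [Hb1 Hb2]].
    exists a, b. auto.
  - intros [a [b [Ha [Hb Hz]]]]. exists a. split; auto. apply in_map_iff. eauto.
Qed.
Lemma map_allpairs {U V W X} (f : W -> X) (h : U -> V -> W) l1 l2 :
  map f (allpairs h l1 l2) = allpairs (fun a b => f (h a b)) l1 l2.
Proof.
  unfold allpairs. induction l1 as [|a l1 IH]; [reflexivity|].
  simpl. rewrite map_app, IH, map_map. reflexivity.
Qed.
Lemma allpairs_map {U V U' V' W} (h : U' -> V' -> W) (g1 : U -> U') (g2 : V -> V') l1 l2 :
  allpairs h (map g1 l1) (map g2 l2) = allpairs (fun a b => h (g1 a) (g2 b)) l1 l2.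
Proof.
  unfold allpairs. induction l1 as [|a l1 IH]; [reflexivity|].
  simpl. rewrite IH, map_map. reflexivity.
Qed.
Lemma allpairs_ext_in {U V W} (h h' : U -> V -> W) l1 l2 :
  (forall a b, In a l1 -> In b l2 -> h a b = h' a b) -> allpairs h l1 l2 = allpairs h' l1 l2.
Proof.
  intro H. unfold allpairs. induction l1 as [|a l1 IH]; [reflexivity|].
  simpl. f_equal.
  - apply map_ext_in. intros b Hb. apply H; simpl; auto.
  - apply IH. intros a' b Ha Hb. apply H; simpl; auto.
Qed.
Lemma big_allpairs {T} (op h : T -> T -> T) d
  (Hassoc : forall a b c, op a (op b c) = op (op a b) c)
  (H1 : forall a b c, h (op a b) c = op (h a c) (h b c))
  (H2 : forall a b c, h c (op a b) = op (h c a) (h c b)) l1 l2 :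
  l1 <> [] -> l2 <> [] -> big op d (allpairs h l1 l2) = h (big op d l1) (big op d l2).
Proof.
  induction l1 as [|a l1 IH]; intros Hl1 Hl2; [congruence|].
  unfold allpairs; simpl flat_map. destruct l1 as [|a' l1].
  - simpl flat_map. rewrite app_nil_r. apply (big_map op op d d (h a) (fun x y => H2 x y a) l2 Hl2).
  - rewrite (big_app op d Hassoc).
    2:{ intro E; apply map_eq_nil in E; congruence. }
    2:{ apply (allpairs_neq_nil h (a' :: l1) l2); congruence. }
    fold (allpairs h (a' :: l1) l2). rewrite IH by congruence.
    rewrite (big_map op op d d (h a) (fun x y => H2 x y a) l2 Hl2).
    rewrite (big_cons _ _ a (a' :: l1)) by congruence. symmetry. apply H1.
Qed.

(* A normal form
   D : nform is a nonempty list of nonempty rows of linear forms; it is read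
   either as the join of the meets of its rows or, dually, as the meet of the
   joins of its rows.  normal_forms t computes both readings simultaneously:
   scaling by a negative number exchanges them, sums multiply rows out, and
   a join is a concatenation in the first reading and a distributed product
   in the second. *)
Section NormalForms.
Variable A : Type.
Definition linform := list (R * A).
Definition scale_form (c : R) (L : linform) : linform := map (fun p => (c * fst p, snd p)) L.
Inductive lterm := TVar (a : A) | TZero | TAdd (t1 t2 : lterm) | TScal (c : R) (t : lterm)
  | TJoin (t1 t2 : lterm).
Definition nform := list (list linform).
Definition nf_scale (c : R) (D : nform) : nform := map (map (scale_form c)) D.
Definition nf_add (D1 D2 : nform) : nform :=
  allpairs (fun r1 r2 => allpairs (@app _) r1 r2) D1 D2.
Fixpoint normal_forms (t : lterm) : nform * nform :=
  match t with
  | TVar a => ([[[(1,a)]]], [[[(1,a)]]])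
  | TZero => ([[[]]], [[[]]])
  | TAdd t1 t2 => (nf_add (fst (normal_forms t1)) (fst (normal_forms t2)),
                   nf_add (snd (normal_forms t1)) (snd (normal_forms t2)))
  | TScal c t => if Rle_dec 0 c
                 then (nf_scale c (fst (normal_forms t)), nf_scale c (snd (normal_forms t)))
                 else (nf_scale c (snd (normal_forms t)), nf_scale c (fst (normal_forms t)))
  | TJoin t1 t2 => (fst (normal_forms t1) ++ fst (normal_forms t2),
                    allpairs (@app _) (snd (normal_forms t1)) (snd (normal_forms t2)))
  end.

(* Nonemptiness of D and of its rows, so that the iterated operations never
   see the empty list. *)
Definition wf_nf (D : nform) := D <> [] /\ forall r, In r D -> r <> [].

Lemma wf_nf_scale c D : wf_nf D -> wf_nf (nf_scale c D).
Proof.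
  intros [H1 H2]. split. apply map_neq_nil, H1.
  intros r Hr. unfold nf_scale in Hr. apply in_map_iff in Hr. destruct Hr as [r0 [<- Hr0]].
  apply map_neq_nil, H2, Hr0.
Qed.
Lemma wf_nf_add D1 D2 : wf_nf D1 -> wf_nf D2 -> wf_nf (nf_add D1 D2).
Proof.
  intros [H1 H2] [H3 H4]. split. apply allpairs_neq_nil; assumption.
  intros r Hr. apply in_allpairs in Hr. destruct Hr as [a [b [Ha [Hb ->]]]].
  apply allpairs_neq_nil; auto.
Qed.
Lemma wf_nf_app D1 D2 : wf_nf D1 -> wf_nf D2 -> wf_nf (D1 ++ D2).
Proof.
  intros [H1 H2] [H3 H4]. split. destruct D1; simpl; congruence.
  intros r Hr. apply in_app_or in Hr. destruct Hr; auto.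
Qed.
Lemma wf_nf_allpairs_app D1 D2 : wf_nf D1 -> wf_nf D2 -> wf_nf (allpairs (@app _) D1 D2).
Proof.
  intros [H1 H2] [H3 H4]. split. apply allpairs_neq_nil; assumption.
  intros r Hr. apply in_allpairs in Hr. destruct Hr as [a [b [Ha [Hb ->]]]].
  specialize (H2 a Ha). destruct a; simpl; congruence.
Qed.
Lemma normal_forms_wf t : wf_nf (fst (normal_forms t)) /\ wf_nf (snd (normal_forms t)).
Proof.
  induction t as [a| |t1 IH1 t2 IH2|c t IH|t1 IH1 t2 IH2]; simpl.
  - split; split; simpl; try congruence; intros r [<-|[]]; congruence.
  - split; split; simpl; try congruence; intros r [<-|[]]; congruence.
  - destruct IH1, IH2. split; apply wf_nf_add; assumption.
  - destruct IH. destruct (Rle_dec 0 c); simpl; split; apply wf_nf_scale; assumption.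
  - destruct IH1, IH2. split. apply wf_nf_app; assumption. apply wf_nf_allpairs_app; assumption.
Qed.

Section Eval.
Variable Y : BanachLattice.
Fixpoint eval_form (y : A -> Y) (L : linform) : Y :=
  match L with [] => bl_zero | p :: L' => bl_add (bl_scal (fst p) (y (snd p))) (eval_form y L') end.
Fixpoint eval_term (y : A -> Y) (t : lterm) : Y :=
  match t with
  | TVar a => y a
  | TZero => bl_zero
  | TAdd t1 t2 => bl_add (eval_term y t1) (eval_term y t2)
  | TScal c t => bl_scal c (eval_term y t)
  | TJoin t1 t2 => bl_join (eval_term y t1) (eval_term y t2)
  end.
Definition eval_nf (opi opo : Y -> Y -> Y) (y : A -> Y) (D : nform) : Y :=
  big opo bl_zero (map (fun r => big opi bl_zero (map (eval_form y) r)) D).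
Definition eval_join_meet y D := eval_nf (meet Y) bl_join y D.
Definition eval_meet_join y D := eval_nf bl_join (meet Y) y D.

Lemma eval_form_app y L1 L2 : eval_form y (L1 ++ L2) = bl_add (eval_form y L1) (eval_form y L2).
Proof.
  induction L1 as [|p L1 IH]; simpl. symmetry; apply add0l.
  rewrite IH. apply bl_addA.
Qed.
Lemma eval_form_scale y c L : eval_form y (scale_form c L) = bl_scal c (eval_form y L).
Proof.
  induction L as [|p L IH]; simpl. symmetry; apply scal_zero.
  rewrite IH, bl_scalDr, bl_scalA. reflexivity.
Qed.

Lemma eval_nf_scale (opi opo opi' opo' : Y -> Y -> Y) c y D :
  (forall a b, bl_scal c (opi a b) = opi' (bl_scal c a) (bl_scal c b)) ->
  (forall a b, bl_scal c (opo a b) = opo' (bl_scal c a) (bl_scal c b)) ->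
  wf_nf D -> eval_nf opi' opo' y (nf_scale c D) = bl_scal c (eval_nf opi opo y D).
Proof.
  intros Hi Ho [HD1 HD2]. unfold eval_nf, nf_scale. rewrite map_map.
  rewrite <- (big_map opo opo' bl_zero bl_zero (bl_scal c) Ho); [|apply map_neq_nil, HD1].
  rewrite map_map. f_equal. apply map_ext_in. intros r Hr.
  rewrite map_map.
  rewrite <- (big_map opi opi' bl_zero bl_zero (bl_scal c) Hi); [|apply map_neq_nil, HD2, Hr].
  rewrite map_map. f_equal. apply map_ext. intro L. apply eval_form_scale.
Qed.

Lemma eval_nf_add (opi opo : Y -> Y -> Y) y D1 D2 :
  (forall a b c, opi a (opi b c) = opi (opi a b) c) ->
  (forall a b c, opo a (opo b c) = opo (opo a b) c) ->
  (forall a b c, bl_add (opi a b) c = opi (bl_add a c) (bl_add b c)) ->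
  (forall a b c, bl_add c (opi a b) = opi (bl_add c a) (bl_add c b)) ->
  (forall a b c, bl_add (opo a b) c = opo (bl_add a c) (bl_add b c)) ->
  (forall a b c, bl_add c (opo a b) = opo (bl_add c a) (bl_add c b)) ->
  wf_nf D1 -> wf_nf D2 ->
  eval_nf opi opo y (nf_add D1 D2) = bl_add (eval_nf opi opo y D1) (eval_nf opi opo y D2).
Proof.
  intros Ai Ao Hi1 Hi2 Ho1 Ho2 [H1 H2] [H3 H4]. unfold eval_nf, nf_add.
  rewrite map_allpairs.
  rewrite (allpairs_ext_in _ (fun a b => bl_add (big opi bl_zero (map (eval_form y) a))
                                         (big opi bl_zero (map (eval_form y) b)))).
  - rewrite <- (allpairs_map bl_add (fun r => big opi bl_zero (map (eval_form y) r))
                              (fun r => big opi bl_zero (map (eval_form y) r))).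
    apply big_allpairs; auto using map_neq_nil.
  - intros a b Ha Hb. rewrite map_allpairs.
    rewrite (allpairs_ext_in _ (fun u v => bl_add (eval_form y u) (eval_form y v))).
    + rewrite <- (allpairs_map bl_add (eval_form y) (eval_form y)).
      apply big_allpairs; auto using map_neq_nil.
    + intros; apply eval_form_app.
Qed.

Lemma eval_nf_app (opi opo : Y -> Y -> Y) y D1 D2 :
  (forall a b c, opo a (opo b c) = opo (opo a b) c) ->
  wf_nf D1 -> wf_nf D2 ->
  eval_nf opi opo y (D1 ++ D2) = opo (eval_nf opi opo y D1) (eval_nf opi opo y D2).
Proof.
  intros Ao [H1 H2] [H3 H4]. unfold eval_nf. rewrite map_app. apply big_app; auto using map_neq_nil.
Qed.

Lemma eval_nf_allpairs_app (opi opo : Y -> Y -> Y) y D1 D2 :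
  (forall a b c, opi a (opi b c) = opi (opi a b) c) ->
  (forall a b c, opo a (opo b c) = opo (opo a b) c) ->
  (forall a b c, opi (opo a b) c = opo (opi a c) (opi b c)) ->
  (forall a b c, opi c (opo a b) = opo (opi c a) (opi c b)) ->
  wf_nf D1 -> wf_nf D2 ->
  eval_nf opi opo y (allpairs (@app _) D1 D2) = opi (eval_nf opi opo y D1) (eval_nf opi opo y D2).
Proof.
  intros Ai Ao Hd1 Hd2 [H1 H2] [H3 H4]. unfold eval_nf.
  rewrite map_allpairs.
  rewrite (allpairs_ext_in _ (fun a b => opi (big opi bl_zero (map (eval_form y) a))
                                         (big opi bl_zero (map (eval_form y) b)))).
  - rewrite <- (allpairs_map opi (fun r => big opi bl_zero (map (eval_form y) r))
                              (fun r => big opi bl_zero (map (eval_form y) r))).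
    apply big_allpairs; auto using map_neq_nil.
  - intros a b Ha Hb. rewrite map_app. apply big_app; auto using map_neq_nil.
Qed.

Theorem normal_forms_correct t y :
  eval_term y t = eval_join_meet y (fst (normal_forms t)) /\
  eval_term y t = eval_meet_join y (snd (normal_forms t)).
Proof.
  induction t as [a| |t1 IH1 t2 IH2|c t IH|t1 IH1 t2 IH2].
  - unfold eval_join_meet, eval_meet_join, eval_nf; simpl.
    rewrite bl_add0, bl_scal1. split; reflexivity.
  - unfold eval_join_meet, eval_meet_join, eval_nf; simpl. split; reflexivity.
  - destruct (normal_forms_wf t1) as [O1 O1'], (normal_forms_wf t2) as [O2 O2']. simpl.
    destruct IH1 as [E1 E1'], IH2 as [E2 E2']. unfold eval_join_meet, eval_meet_join in *.
    rewrite E1, E2 at 1. rewrite E1', E2'.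
    split; symmetry; apply eval_nf_add; auto using join_assoc, meet_assoc, join_add, add_join,
      meet_add, add_meet.
  - destruct (normal_forms_wf t) as [O O']. destruct IH as [E E']. simpl.
    destruct (Rle_dec 0 c) as [Hc|Hc]; simpl; unfold eval_join_meet, eval_meet_join in *.
    + rewrite E at 1. rewrite E'. split; symmetry; apply eval_nf_scale; auto;
        intros; first [apply meet_scal | apply join_scal]; assumption.
    + rewrite E' at 1. rewrite E. split; symmetry; apply eval_nf_scale; auto;
        intros; first [apply meet_scal_neg | apply join_scal_neg]; lra.
  - destruct (normal_forms_wf t1) as [O1 O1'], (normal_forms_wf t2) as [O2 O2']. simpl.
    destruct IH1 as [E1 E1'], IH2 as [E2 E2']. unfold eval_join_meet, eval_meet_join in *.
    rewrite E1, E2 at 1. rewrite E1', E2'.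
    split; symmetry.
    + apply eval_nf_app; auto using join_assoc.
    + apply eval_nf_allpairs_app; auto using join_assoc, meet_assoc.
      * intros; rewrite !(join_comm _ _ c). apply join_meet_distr.
      * intros; apply join_meet_distr.
Qed.
End Eval.
End NormalForms.

Arguments scale_form {A}. Arguments eval_form {A} Y. Arguments eval_term {A} Y.
Arguments normal_forms {A}. Arguments wf_nf {A}. Arguments eval_join_meet {A} Y.
Arguments normal_forms_wf {A}. Arguments normal_forms_correct {A} Y.
Arguments TVar {A}. Arguments TZero {A}. Arguments TAdd {A}. Arguments TScal {A}.
Arguments TJoin {A}.

(* The real line as a Banach lattice.  Terms evaluated in it are the
   elements of FVL(A); it is also the test lattice of the transfer principle. *)
Lemma Rabs_max (x : R) : Rabs x = Rmax x (- x).
Proof. unfold Rabs, Rmax. destruct (Rcase_abs x), (Rle_dec x (-x)); lra. Qed.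

Lemma R_cauchy_complete (u : nat -> R) :
  (forall eps, 0 < eps -> exists N, forall n m, (N <= n)%nat -> (N <= m)%nat ->
        Rabs (u n + - u m) < eps) ->
  exists l, forall eps, 0 < eps -> exists N, forall n, (N <= n)%nat -> Rabs (u n + - l) < eps.
Proof.
  intro H. destruct (R_complete u) as [l Hl].
  - intros eps He. destruct (H eps He) as [N HN]. exists N. intros n m Hn Hm.
    unfold Rdist. apply HN; lia.
  - exists l. intros eps He. destruct (Hl eps He) as [N HN]. exists N. intros n Hn.
    apply HN. lia.
Qed.

Definition Rlat : BanachLattice := {|
  bl_car := R; bl_zero := 0; bl_add := Rplus; bl_opp := Ropp; bl_scal := Rmult;
  bl_le := Rle; bl_join := Rmax; bl_norm := Rabs;
  bl_addA := ltac:(intros; ring); bl_addC := ltac:(intros; ring);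
  bl_add0 := ltac:(intros; ring); bl_addN := ltac:(intros; ring);
  bl_scal1 := ltac:(intros; ring); bl_scalA := ltac:(intros; ring);
  bl_scalDr := ltac:(intros; ring); bl_scalDl := ltac:(intros; ring);
  bl_le_refl := Rle_refl; bl_le_trans := Rle_trans; bl_le_antisym := Rle_antisym;
  bl_le_add := ltac:(intros; lra);
  bl_le_scal := ltac:(intros; apply Rmult_le_compat_l; assumption);
  bl_join_l := Rmax_l; bl_join_r := Rmax_r;
  bl_join_least := ltac:(intros; apply Rmax_lub; assumption);
  bl_norm_triangle := Rabs_triang; bl_norm_scal := Rabs_mult;
  bl_norm_eq0 := ltac:(intros x H; unfold Rabs in H; destruct (Rcase_abs x); lra);
  bl_norm_lattice := ltac:(intros x y H; rewrite !Rabs_max; exact H);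
  bl_complete := R_cauchy_complete
|}.

Lemma Rlat_meet (a b : R) : meet Rlat a b = Rmin a b.
Proof. unfold meet; simpl. unfold Rmin, Rmax. destruct (Rle_dec a b), (Rle_dec (-a) (-b)); lra. Qed.

Lemma root_lt (a b m n : R) : 0 < a -> b < 0 -> 0 < - b * m + a * n -> - m / a < - n / b.
Proof.
  intros Ha Hb Hpos. set (t1 := - m / a). set (t2 := - n / b).
  assert (E1 : a * t1 = - m) by (unfold t1; field; lra).
  assert (E2 : b * t2 = - n) by (unfold t2; field; lra).
  assert (E3 : (a * b) * (t1 - t2) = - b * m + a * n).
  { replace ((a * b) * (t1 - t2)) with (b * (a * t1) - a * (b * t2)) by ring.
    rewrite E1, E2. ring. }
  assert (Hab : a * b < 0) by nra.
  destruct (Rlt_or_le t1 t2) as [Hl|Hl]; [exact Hl|].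
  assert ((a * b) * (t1 - t2) <= 0) by nra. lra.
Qed.
Lemma pos_above_root (a m v : R) : 0 < a -> - m / a < v -> 0 < a * v + m.
Proof.
  intros Ha Hv. set (t := - m / a) in *. assert (E : a * t = - m) by (unfold t; field; lra). nra.
Qed.
Lemma pos_below_root (a m v : R) : a < 0 -> v < - m / a -> 0 < a * v + m.
Proof.
  intros Ha Hv. set (t := - m / a) in *. assert (E : a * t = - m) by (unfold t; field; lra). nra.
Qed.

Lemma exists_between_one (b : R) (cs : list R) : (forall c, In c cs -> b < c) ->
  exists w, b < w /\ forall c, In c cs -> w < c.
Proof.
  induction cs as [|c cs IH]; intro H.
  - exists (b + 1). split; [lra| intros c []].
  - destruct IH as [w [H1 H2]]; [intros; apply H; right; assumption|].
    assert (Hc : b < c) by (apply H; left; reflexivity).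
    exists (Rmin w ((b + c) / 2)). split.
    + unfold Rmin; destruct (Rle_dec w ((b+c)/2)); lra.
    + intros c' [<-|Hc']; unfold Rmin; destruct (Rle_dec w ((b+c)/2)); try lra;
        specialize (H2 c' Hc'); lra.
Qed.
Lemma exists_between (bs cs : list R) : (forall b c, In b bs -> In c cs -> b < c) ->
  exists v, (forall b, In b bs -> b < v) /\ (forall c, In c cs -> v < c).
Proof.
  induction bs as [|b bs IH]; intro H.
  - clear H. induction cs as [|c cs IHc].
    + exists 0. split; intros _ [].
    + destruct IHc as [v [_ Hv]]. exists (Rmin v (c - 1)). split; [intros _ []|].
      intros c' [<-|Hc']; unfold Rmin; destruct (Rle_dec v (c-1)); try lra;
        specialize (Hv c' Hc'); lra.
  - destruct IH as [v [Hv1 Hv2]]; [intros; apply H; [right|]; assumption|].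
    destruct (exists_between_one b cs) as [w [Hw1 Hw2]]; [intros; apply H; [left|]; auto|].
    exists (Rmax v w). split.
    + intros b' [<-|Hb']; unfold Rmax; destruct (Rle_dec v w); try lra;
        specialize (Hv1 b' Hb'); lra.
    + intros c Hc. specialize (Hv2 c Hc). specialize (Hw2 c Hc).
      unfold Rmax; destruct (Rle_dec v w); lra.
Qed.

(* Gordan's alternative via Fourier-Motzkin elimination: if finitely many
   linear forms on R^A have no common point of strict positivity, then a
   nontrivial positive combination of them is the zero form. *)
Section FourierMotzkin.
Variable A : Type.
Definition var_eq_dec (a b : A) : {a = b} + {a <> b} := excluded_middle_informative (a = b).
Definition coef (b : A) (L : linform A) : R :=
  fold_right (fun p acc => (if var_eq_dec (snd p) b then fst p else 0) + acc) 0 L.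
Definition drop_var (a : A) (L : linform A) : linform A :=
  filter (fun p => if var_eq_dec (snd p) a then false else true) L.
Definition comb_coef (b : A) (cert : list (R * linform A)) : R :=
  fold_right (fun q acc => fst q * coef b (snd q) + acc) 0 cert.
Definition eval_form_R (x : A -> R) (L : linform A) : R := eval_form Rlat x L.

Lemma coef_app b L1 L2 : coef b (L1 ++ L2) = coef b L1 + coef b L2.
Proof. induction L1 as [|p L1 IH]; simpl; [ring|]. rewrite IH; ring. Qed.
Lemma coef_scale b c L : coef b (scale_form c L) = c * coef b L.
Proof.
  induction L as [|p L IH]; simpl; [ring|]. rewrite IH. destruct (var_eq_dec (snd p) b); ring.
Qed.
Lemma coef_drop_var a b L : coef b (drop_var a L) = if var_eq_dec b a then 0 else coef b L.
Proof.
  induction L as [|p L IH]; simpl; [destruct (var_eq_dec b a); reflexivity|].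
  destruct (var_eq_dec (snd p) a); simpl; rewrite IH;
    destruct (var_eq_dec b a), (var_eq_dec (snd p) b); subst; try congruence; ring.
Qed.
Lemma in_drop_var a p L : In p (drop_var a L) <-> In p L /\ snd p <> a.
Proof.
  unfold drop_var. rewrite filter_In. destruct (var_eq_dec (snd p) a); intuition congruence.
Qed.
Lemma in_scale_form c (p : R * A) (L : linform A) :
  In p (scale_form c L) -> exists p0, In p0 L /\ snd p = snd p0.
Proof.
  unfold scale_form. intro H. apply in_map_iff in H. destruct H as [p0 [<- H]]. exists p0; auto.
Qed.

Lemma eval_form_split (Y : BanachLattice) (y : A -> Y) a L :
  eval_form Y y L = bl_add (bl_scal (coef a L) (y a)) (eval_form Y y (drop_var a L)).
Proof.
  induction L as [|p L IH]; simpl.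
  - rewrite scal0, bl_add0. reflexivity.
  - rewrite IH. destruct (var_eq_dec (snd p) a) as [E|E]; simpl.
    + rewrite E, bl_scalDl, bl_addA. reflexivity.
    + rewrite Rplus_0_l, !bl_addA, (bl_addC _ (bl_scal _ (y (snd p)))). reflexivity.
Qed.
Lemma eval_form_ext (Y : BanachLattice) (y y' : A -> Y) L :
  (forall p, In p L -> y (snd p) = y' (snd p)) -> eval_form Y y L = eval_form Y y' L.
Proof.
  induction L as [|p L IH]; intro H; simpl; [reflexivity|].
  rewrite H by (left; reflexivity). rewrite IH; [reflexivity|].
  intros; apply H; right; assumption.
Qed.

Lemma eval_form_zero (Y : BanachLattice) (y : A -> Y) L :
  (forall b, coef b L = 0) -> eval_form Y y L = bl_zero.
Proof.
  remember (length L) as n. assert (Hn : (length L <= n)%nat) by lia. clear Heqn.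
  revert L Hn. induction n as [|n IH]; intros L Hn H.
  - destruct L; [reflexivity| simpl in Hn; lia].
  - destruct L as [|p L]; [reflexivity|].
    rewrite (eval_form_split Y y (snd p)), H, scal0, add0l. apply IH.
    + unfold drop_var. simpl. destruct (var_eq_dec (snd p) (snd p)); [|congruence].
      simpl in Hn.
      pose proof (filter_length_le
                    (fun p0 => if var_eq_dec (snd p0) (snd p) then false else true) L). lia.
    + intro b. rewrite coef_drop_var. destruct (var_eq_dec b (snd p)); auto.
Qed.

(* One elimination step for the variable a: keep the forms without a, and
   for every pair (p, n) with coef a p > 0 > coef a n add the positive
   combination cancel_pair p n in which a cancels. *)
Section Elimination.
Variable a : A.
Definition zero_forms (Ls : list (linform A)) :=
  filter (fun L => if Req_EM_T (coef a L) 0 then true else false) Ls.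
Definition pos_forms (Ls : list (linform A)) :=
  filter (fun L => if Rlt_dec 0 (coef a L) then true else false) Ls.
Definition neg_forms (Ls : list (linform A)) :=
  filter (fun L => if Rlt_dec (coef a L) 0 then true else false) Ls.
Definition cancel_pair (p n : linform A) : linform A :=
  scale_form (- coef a n) (drop_var a p) ++ scale_form (coef a p) (drop_var a n).
Definition eliminate (Ls : list (linform A)) : list (linform A) :=
  map (drop_var a) (zero_forms Ls) ++ allpairs cancel_pair (pos_forms Ls) (neg_forms Ls).

Lemma in_zero_forms L Ls : In L (zero_forms Ls) <-> In L Ls /\ coef a L = 0.
Proof.
  unfold zero_forms. rewrite filter_In. destruct (Req_EM_T _ 0); intuition congruence.
Qed.
Lemma in_pos_forms L Ls : In L (pos_forms Ls) <-> In L Ls /\ 0 < coef a L.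
Proof. unfold pos_forms. rewrite filter_In. destruct (Rlt_dec 0 _); intuition congruence. Qed.
Lemma in_neg_forms L Ls : In L (neg_forms Ls) <-> In L Ls /\ coef a L < 0.
Proof. unfold neg_forms. rewrite filter_In. destruct (Rlt_dec _ 0); intuition congruence. Qed.

Lemma eliminate_vars (vs : list A) (Ls : list (linform A)) :
  (forall L, In L Ls -> forall p, In p L -> In (snd p) (a :: vs)) ->
  forall L, In L (eliminate Ls) -> forall p, In p L -> In (snd p) vs.
Proof.
  intros Hv L HL p Hp.
  assert (Hdrop : forall L0 p0, In L0 Ls -> In p0 (drop_var a L0) -> In (snd p0) vs).
  { intros L0 p0 HL0 Hp0. apply in_drop_var in Hp0. destruct Hp0 as [Hp0 Hpa].
    destruct (Hv L0 HL0 p0 Hp0); [congruence|assumption]. }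
  apply in_app_or in HL. destruct HL as [HL|HL].
  - apply in_map_iff in HL. destruct HL as [L0 [<- HL0]].
    exact (Hdrop L0 p (proj1 (proj1 (in_zero_forms _ _) HL0)) Hp).
  - apply in_allpairs in HL. destruct HL as [p0 [n0 [Hp0 [Hn0 ->]]]].
    apply in_pos_forms in Hp0. apply in_neg_forms in Hn0.
    apply in_app_or in Hp. destruct Hp as [Hp|Hp]; apply in_scale_form in Hp;
      destruct Hp as [p1 [Hp1 ->]].
    + exact (Hdrop p0 p1 (proj1 Hp0) Hp1).
    + exact (Hdrop n0 p1 (proj1 Hn0) Hp1).
Qed.

(* Otherwise some x makes all of it
   positive; the value v of the variable a can then be chosen between the
   zeros -L'(x)/coef a L of the forms with positive and negative coefficient,
   and the modified point makes every form of Ls positive. *)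
Lemma eliminate_no_positive_point (Ls : list (linform A)) :
  (forall x : A -> R, exists L, In L Ls /\ eval_form_R x L <= 0) ->
  forall x : A -> R, exists L, In L (eliminate Ls) /\ eval_form_R x L <= 0.
Proof.
  intros Hx x.
  destruct (classic (exists L, In L (eliminate Ls) /\ eval_form_R x L <= 0)) as [H|H];
    [exact H|exfalso].
  assert (Hpos : forall L, In L (eliminate Ls) -> 0 < eval_form_R x L).
  { intros L HL. apply Rnot_le_lt. intro Hle. apply H. eauto. }
  set (zero_of := fun L => - eval_form_R x (drop_var a L) / coef a L).
  destruct (exists_between (map zero_of (pos_forms Ls)) (map zero_of (neg_forms Ls)))
    as [v [Hv1 Hv2]].
  { intros b c Hb Hc. apply in_map_iff in Hb, Hc.
    destruct Hb as [p [<- Hp]], Hc as [n [<- Hn]].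
    assert (Hc : In (cancel_pair p n) (eliminate Ls))
      by (apply in_or_app; right; apply in_allpairs; eauto).
    specialize (Hpos _ Hc). unfold cancel_pair, eval_form_R in Hpos.
    rewrite eval_form_app, !eval_form_scale in Hpos. simpl in Hpos.
    apply in_pos_forms in Hp; apply in_neg_forms in Hn.
    unfold zero_of, eval_form_R. apply root_lt; tauto. }
  set (xt := fun b => if var_eq_dec b a then v else x b).
  assert (Hxt : forall L, eval_form_R xt L = coef a L * v + eval_form_R x (drop_var a L)).
  { intro L. unfold eval_form_R. rewrite (eval_form_split Rlat xt a L). simpl.
    unfold xt at 1. destruct (var_eq_dec a a); [|congruence]. f_equal. apply eval_form_ext.
    intros p Hp. apply in_drop_var in Hp. unfold xt.
    destruct (var_eq_dec (snd p) a); [tauto|reflexivity]. }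
  destruct (Hx xt) as [L [HL HLe]]. rewrite Hxt in HLe.
  destruct (Rtotal_order (coef a L) 0) as [Hl|[Hl|Hl]].
  - assert (HLn : In L (neg_forms Ls)) by (apply in_neg_forms; auto).
    pose proof (pos_below_root _ _ _ Hl (Hv2 _ (in_map zero_of _ _ HLn))). lra.
  - assert (HLz : In (drop_var a L) (eliminate Ls))
      by (apply in_or_app; left; apply in_map, in_zero_forms; auto).
    specialize (Hpos _ HLz). rewrite Hl in HLe. lra.
  - assert (HLp : In L (pos_forms Ls)) by (apply in_pos_forms; auto).
    pose proof (pos_above_root _ _ _ Hl (Hv1 _ (in_map zero_of _ _ HLp))). lra.
Qed.

Lemma eliminate_lift_comb (Ls : list (linform A)) (c' : list (R * linform A)) :
  (forall q, In q c' -> 0 < fst q /\ In (snd q) (eliminate Ls)) ->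
  exists c, (c' <> [] -> c <> []) /\ (forall q, In q c -> 0 < fst q /\ In (snd q) Ls) /\
    forall b, comb_coef b c = comb_coef b c'.
Proof.
  induction c' as [|[mu L'] c' IHc]; intro Hc.
  - exists []. split; [congruence|]. split; [intros _ []|]. reflexivity.
  - destruct IHc as [c [_ [Hc1 Hc2]]]; [intros; apply Hc; right; assumption|].
    destruct (Hc (mu, L') (or_introl eq_refl)) as [Hmu HL']. simpl in Hmu, HL'.
    apply in_app_or in HL'. destruct HL' as [HL'|HL'].
    + apply in_map_iff in HL'. destruct HL' as [L [<- HL]].
      apply in_zero_forms in HL. destruct HL as [HL HaL].
      exists ((mu, L) :: c). split; [discriminate|]. split.
      * intros q [<-|Hq]; [simpl; auto| auto].
      * intro b. simpl. rewrite Hc2, coef_drop_var.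
        destruct (var_eq_dec b a) as [->|]; [rewrite HaL; ring|reflexivity].
    + apply in_allpairs in HL'. destruct HL' as [p [n [Hp [Hn ->]]]].
      apply in_pos_forms in Hp; apply in_neg_forms in Hn.
      exists ((mu * - coef a n, p) :: (mu * coef a p, n) :: c). split; [discriminate|].
      split.
      * intros q [<-|[<-|Hq]]; simpl; auto;
          (split; [apply Rmult_lt_0_compat; lra|tauto]).
      * intro b. simpl. rewrite Hc2. unfold cancel_pair.
        rewrite coef_app, !coef_scale, !coef_drop_var.
        destruct (var_eq_dec b a) as [->|]; ring.
Qed.
End Elimination.

Theorem gordan_alternative (vs : list A) : forall Ls : list (linform A),
  (forall L, In L Ls -> forall p, In p L -> In (snd p) vs) ->
  (forall x : A -> R, exists L, In L Ls /\ eval_form_R x L <= 0) ->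
  exists cert : list (R * linform A), cert <> [] /\
    (forall q, In q cert -> 0 < fst q /\ In (snd q) Ls) /\ forall b, comb_coef b cert = 0.
Proof.
  induction vs as [|a vs IH]; intros Ls Hv Hx.
  - destruct (Hx (fun _ => 0)) as [L0 [HL0 _]]. exists [(1, L0)].
    split; [discriminate|]. split.
    + intros q [<-|[]]. simpl. split; [lra|exact HL0].
    + intro b. simpl. assert (L0 = []) as ->.
      { destruct L0 as [|p L0]; auto. exfalso. exact (Hv _ HL0 p (or_introl eq_refl)). }
      simpl; ring.
  - destruct (IH (eliminate a Ls) (eliminate_vars a vs Ls Hv)
                 (eliminate_no_positive_point a Ls Hx)) as [cert' [Hne [Hin Hsum]]].
    destruct (eliminate_lift_comb a Ls cert' Hin) as [c [Hc1 [Hc2 Hc3]]].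
    exists c. split; auto. split; auto. intro b; rewrite Hc3; auto.
Qed.
End FourierMotzkin.

Lemma bigr_join_ge (Y : BanachLattice) (x v : Y) l :
  In v (x :: l) -> bl_le v (bigr bl_join x l).
Proof.
  revert x. induction l as [|y l IH]; intros x Hv; simpl.
  - destruct Hv as [<-|[]]. apply bl_le_refl.
  - destruct Hv as [<-|Hv]; [apply bl_join_l|].
    apply bl_le_trans with (bigr bl_join y l); [apply IH, Hv|apply bl_join_r].
Qed.
Lemma big_join_ge (Y : BanachLattice) d (v : Y) l : In v l -> bl_le v (big bl_join d l).
Proof. destruct l as [|x l]; [intros []|]. apply bigr_join_ge. Qed.
Lemma bigr_meet_le (Y : BanachLattice) (x v : Y) l :
  In v (x :: l) -> bl_le (bigr (meet Y) x l) v.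
Proof.
  revert x. induction l as [|y l IH]; intros x Hv; simpl.
  - destruct Hv as [<-|[]]. apply bl_le_refl.
  - destruct Hv as [<-|Hv]; [apply meet_l|].
    apply bl_le_trans with (bigr (meet Y) y l); [apply meet_r|apply IH, Hv].
Qed.
Lemma big_meet_le (Y : BanachLattice) d (v : Y) l : In v l -> bl_le (big (meet Y) d l) v.
Proof. destruct l as [|x l]; [intros []|]. apply bigr_meet_le. Qed.
Lemma bigr_join_le (Y : BanachLattice) (x w : Y) l :
  (forall v, In v (x :: l) -> bl_le v w) -> bl_le (bigr bl_join x l) w.
Proof.
  revert x. induction l as [|y l IH]; intros x H; simpl.
  - apply H; left; reflexivity.
  - apply bl_join_least; [apply H; left; reflexivity|].
    apply IH. intros v Hv; apply H; right; exact Hv.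
Qed.
Lemma big_join_le (Y : BanachLattice) d (w : Y) l :
  l <> [] -> (forall v, In v l -> bl_le v w) -> bl_le (big bl_join d l) w.
Proof. destruct l as [|x l]; [congruence|]. intros _. apply bigr_join_le. Qed.

Lemma Rlat_bigr_meet_nonpos (x : R) l :
  bigr (meet Rlat) x l <= 0 -> exists v, In v (x :: l) /\ v <= 0.
Proof.
  revert x. induction l as [|y l IH]; intros x H.
  - exists x. split; [left; reflexivity|exact H].
  - change (bigr (meet Rlat) x (y :: l)) with (meet Rlat x (bigr (meet Rlat) y l)) in H.
    rewrite Rlat_meet in H. unfold Rmin in H. destruct (Rle_dec x (bigr (meet Rlat) y l)).
    + exists x. split; [left; reflexivity|lra].
    + destruct (IH y H) as [v [Hv Hv']]. exists v. split; [right; exact Hv| exact Hv'].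
Qed.
Lemma Rlat_big_meet_nonpos d (l : list R) :
  l <> [] -> big (meet Rlat) d l <= 0 -> exists v, In v l /\ v <= 0.
Proof. destruct l as [|x l]; [congruence|]. intros _. apply Rlat_bigr_meet_nonpos. Qed.

Section Transfer.
Variable A : Type.
Variable Y : BanachLattice.

Definition comb_form (cert : list (R * linform A)) : linform A :=
  flat_map (fun q => scale_form (fst q) (snd q)) cert.
Definition comb_weight (cert : list (R * linform A)) : R :=
  fold_right (fun q acc => fst q + acc) 0 cert.

Lemma coef_comb_form b cert : coef A b (comb_form cert) = comb_coef A b cert.
Proof.
  induction cert as [|q cert IH]; simpl; [reflexivity|].
  rewrite coef_app, coef_scale, IH. reflexivity.
Qed.
Lemma comb_weight_pos (cert : list (R * linform A)) :
  cert <> [] -> (forall q, In q cert -> 0 < fst q) -> 0 < comb_weight cert.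
Proof.
  induction cert as [|q [|q' cert] IH]; intros Hn H; [congruence| |];
    pose proof (H q (or_introl eq_refl)); simpl; [lra|].
  assert (0 < comb_weight (q' :: cert))
    by (apply IH; [discriminate|intros; apply H; right; assumption]).
  simpl in *. lra.
Qed.

Lemma comb_form_ge y cert (z : Y) :
  (forall q, In q cert -> 0 < fst q /\ bl_le z (eval_form Y y (snd q))) ->
  bl_le (bl_scal (comb_weight cert) z) (eval_form Y y (comb_form cert)).
Proof.
  induction cert as [|q cert IH]; intro H; simpl.
  - rewrite scal0. apply bl_le_refl.
  - rewrite eval_form_app, eval_form_scale, bl_scalDl. apply le_add2.
    + destruct (H q (or_introl eq_refl)). apply bl_le_scal; [lra|assumption].
    + apply IH. intros; apply H; right; assumption.
Qed.

(* One row of a normal form: if the forms of r have no common strict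
   positivity point in R^A, their meet is <= 0 in Y.  Gordan gives a
   positive combination with zero form, and weight * meet <= 0. *)
Lemma meet_row_nonpos (r : list (linform A)) : r <> [] ->
  (forall x : A -> R, exists L, In L r /\ eval_form_R A x L <= 0) ->
  forall y : A -> Y, bl_le (big (meet Y) bl_zero (map (eval_form Y y) r)) bl_zero.
Proof.
  intros Hr Hx y.
  destruct (gordan_alternative A (flat_map (map snd) r) r) as [cert [Hne [Hin Hsum]]];
    [|exact Hx|].
  { intros L HL p Hp. apply in_flat_map. exists L. split; auto. apply in_map; auto. }
  set (z := big (meet Y) bl_zero (map (eval_form Y y) r)).
  assert (Hzero : eval_form Y y (comb_form cert) = bl_zero).
  { apply eval_form_zero. intro b. rewrite coef_comb_form. apply Hsum. }
  apply (le_scal_inv Y (comb_weight cert)).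
  - apply comb_weight_pos; auto. intros; apply Hin; assumption.
  - rewrite scal_zero, <- Hzero. apply comb_form_ge.
    intros q Hq. destruct (Hin q Hq) as [Hq1 Hq2]. split; auto.
    apply big_meet_le. apply in_map. exact Hq2.
Qed.

Theorem transfer_principle (t : lterm A) : (forall x : A -> R, eval_term Rlat x t <= 0) ->
  forall y : A -> Y, bl_le (eval_term Y y t) bl_zero.
Proof.
  intros Hx y. destruct (normal_forms_wf t) as [[HD1 HD2] _].
  rewrite (proj1 (normal_forms_correct Y t y)). unfold eval_join_meet, eval_nf.
  apply big_join_le; [apply map_neq_nil, HD1|].
  intros v Hv. apply in_map_iff in Hv. destruct Hv as [r [<- Hr]].
  apply meet_row_nonpos; [apply HD2, Hr|].
  intro x. specialize (Hx x). rewrite (proj1 (normal_forms_correct Rlat t x)) in Hx.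
  unfold eval_join_meet, eval_nf in Hx.
  assert (Hle : big (meet Rlat) bl_zero (map (eval_form Rlat x) r) <= 0).
  { eapply Rle_trans; [|exact Hx]. apply (big_join_ge Rlat).
    apply (in_map (fun r => big (meet Rlat) bl_zero (map (eval_form Rlat x) r))), Hr. }
  destruct (Rlat_big_meet_nonpos _ _ (map_neq_nil _ _ (HD2 r Hr)) Hle) as [v [Hv Hv']].
  apply in_map_iff in Hv. destruct Hv as [L [<- HL]]. exists L. split; auto.
Qed.
End Transfer.

Ltac destruct_minmax := repeat match goal with
  | |- context [Rle_dec ?a ?b] => destruct (Rle_dec a b)
  | |- context [Rcase_abs ?a] => destruct (Rcase_abs a) end.
Lemma Rabs_m1 : Rabs (-1) = 1.
Proof. unfold Rabs. destruct (Rcase_abs (-1)); lra. Qed.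

Section FreeNorm.
Variable A : Type.
Definition term_fun (t : lterm A) : fn A := fun x => eval_term Rlat x t.

Lemma FVL_is_sublattice : is_vector_sublattice (@FVL A).
Proof.
  repeat split.
  - intros S HS Hd. apply HS.
  - intros f g Hf Hg S HS Hd. apply HS; [apply Hf|apply Hg]; assumption.
  - intros c f Hf S HS Hd. apply HS; apply Hf; assumption.
  - intros f g Hf Hg S HS Hd. apply HS; [apply Hf|apply Hg]; assumption.
  - intros f g Hf Hg S HS Hd. apply HS; [apply Hf|apply Hg]; assumption.
Qed.
Lemma FVL_zero : @FVL A fzero. Proof. apply FVL_is_sublattice. Qed.
Lemma FVL_add (f g : fn A) : FVL f -> FVL g -> FVL (fadd f g).
Proof. apply FVL_is_sublattice. Qed.
Lemma FVL_scal c (f : fn A) : FVL f -> FVL (fscal c f).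
Proof. apply FVL_is_sublattice. Qed.
Lemma FVL_max (f g : fn A) : FVL f -> FVL g -> FVL (fmax f g).
Proof. apply FVL_is_sublattice. Qed.
Lemma FVL_delta a : FVL (@delta A a). Proof. intros S HS Hd. apply Hd. Qed.

Lemma FVL_term_fun t : FVL (term_fun t).
Proof.
  induction t as [a| |t1 IH1 t2 IH2|c t IH|t1 IH1 t2 IH2].
  - apply FVL_delta.
  - apply FVL_zero.
  - apply (FVL_add _ _ IH1 IH2).
  - apply (FVL_scal c _ IH).
  - apply (FVL_max _ _ IH1 IH2).
Qed.

(* Conversely the term functions form a vector sublattice containing the
   delta_a (min f g = -max(-f, -g)), so every element of FVL(A) is one. *)
Lemma FVL_term (f : fn A) : FVL f -> exists t, f = term_fun t.
Proof.
  intro Hf. apply Hf.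
  - repeat split.
    + exists TZero. reflexivity.
    + intros f1 g1 [t1 ->] [t2 ->]. exists (TAdd t1 t2). reflexivity.
    + intros c f1 [t1 ->]. exists (TScal c t1). reflexivity.
    + intros f1 g1 [t1 ->] [t2 ->]. exists (TJoin t1 t2). reflexivity.
    + intros f1 g1 [t1 ->] [t2 ->].
      exists (TScal (-1) (TJoin (TScal (-1) t1) (TScal (-1) t2))).
      unfold term_fun, fmin. extensionality x. simpl.
      unfold Rmin, Rmax. destruct (Rle_dec _ _), (Rle_dec _ _); lra.
  - intro a. exists (TVar a). reflexivity.
Qed.

Lemma fzero_scal (f : fn A) : fscal 0 f = fzero.
Proof. unfold fscal, fzero. extensionality x. ring. Qed.

Lemma seminorm_zero (nu : fn A -> R) : lattice_seminorm nu -> nu (@fzero A) = 0.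
Proof.
  intros [_ [Hs _]]. rewrite <- (fzero_scal fzero), Hs by apply FVL_zero.
  rewrite Rabs_R0. ring.
Qed.

(* An a priori bound for all nu in N: delta_a counts 1, and joins are
   bounded through |f \/ g| <= |f| + |g|. *)
Fixpoint term_size (t : lterm A) : R :=
  match t with
  | TVar _ => 1
  | TZero => 0
  | TAdd t1 t2 => term_size t1 + term_size t2
  | TScal c t => Rabs c * term_size t
  | TJoin t1 t2 => term_size t1 + term_size t2
  end.

Definition fabs (f : fn A) : fn A := fmax f (fscal (-1) f).

Lemma calN_term_bound (nu : fn A -> R) t : in_calN nu -> nu (term_fun t) <= term_size t.
Proof.
  intros [Hn Hd]. pose proof Hn as [Ht [Hs Hm]].
  assert (Fa : forall h, FVL h -> FVL (fabs h)).
  { intros h Hh. apply FVL_max; [exact Hh|apply FVL_scal, Hh]. }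
  assert (Hab : forall h, FVL h -> nu (fabs h) <= nu h).
  { intros h Hh. apply Hm; [apply Fa, Hh|exact Hh|]. intro x. unfold fabs, fmax, fscal.
    unfold Rmax, Rabs. destruct_minmax; lra. }
  induction t as [a| |t1 IH1 t2 IH2|c t IH|t1 IH1 t2 IH2]; simpl.
  - apply Hd.
  - change (term_fun TZero) with (@fzero A). rewrite seminorm_zero by assumption. lra.
  - change (term_fun (TAdd t1 t2)) with (fadd (term_fun t1) (term_fun t2)).
    eapply Rle_trans; [apply Ht; apply FVL_term_fun|]. lra.
  - change (term_fun (TScal c t)) with (fscal c (term_fun t)). rewrite Hs by apply FVL_term_fun.
    apply Rmult_le_compat_l; [apply Rabs_pos|exact IH].
  - change (term_fun (TJoin t1 t2)) with (fmax (term_fun t1) (term_fun t2)).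
    pose proof (FVL_term_fun t1) as F1. pose proof (FVL_term_fun t2) as F2.
    apply Rle_trans with (nu (fadd (fabs (term_fun t1)) (fabs (term_fun t2)))).
    + apply Hm; [apply FVL_max; assumption| apply FVL_add; apply Fa; assumption|].
      intro x. unfold fabs, fmax, fscal, fadd. unfold Rmax, Rabs. destruct_minmax; lra.
    + eapply Rle_trans; [apply Ht; apply Fa; assumption|].
      pose proof (Hab _ F1). pose proof (Hab _ F2). lra.
Qed.

Definition calN_values (f : fn A) : R -> Prop := fun r => exists nu, in_calN nu /\ r = nu f.

Definition zero_seminorm : fn A -> R := fun _ => 0.
Lemma zero_seminorm_calN : in_calN zero_seminorm.
Proof. unfold zero_seminorm. split; [split; [|split]|]; intros; lra. Qed.

Lemma calN_values_bounded (f : fn A) : FVL f -> bound (calN_values f).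
Proof.
  intro Hf. destruct (FVL_term f Hf) as [t ->]. exists (term_size t).
  intros r [nu [Hnu ->]]. apply calN_term_bound; assumption.
Qed.
Lemma calN_values_nonempty (f : fn A) : exists r, calN_values f r.
Proof. exists 0. exists zero_seminorm. split; [apply zero_seminorm_calN|reflexivity]. Qed.

Definition fnorm (f : fn A) : R :=
  match excluded_middle_informative (FVL f) with
  | left H => proj1_sig (completeness (calN_values f) (calN_values_bounded f H)
                                      (calN_values_nonempty f))
  | right _ => 0
  end.

Lemma fnorm_lub (f : fn A) : FVL f -> is_lub (calN_values f) (fnorm f).
Proof.
  intro Hf. unfold fnorm. destruct (excluded_middle_informative (FVL f)); [|contradiction].
  destruct (completeness _ _ _) as [m Hm]. exact Hm.
Qed.
Lemma fnorm_ge (nu : fn A -> R) (f : fn A) : in_calN nu -> FVL f -> nu f <= fnorm f.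
Proof. intros Hn Hf. apply (proj1 (fnorm_lub f Hf)). exists nu; auto. Qed.
Lemma fnorm_le (f : fn A) r : FVL f -> (forall nu, in_calN nu -> nu f <= r) -> fnorm f <= r.
Proof.
  intros Hf H. apply (proj2 (fnorm_lub f Hf)). intros s [nu [Hn ->]]. apply H, Hn.
Qed.
Lemma fnorm_nonneg (f : fn A) : FVL f -> 0 <= fnorm f.
Proof. intro Hf. apply (fnorm_ge zero_seminorm f zero_seminorm_calN Hf). Qed.

(* Homogeneity: ||c f|| <= |c| ||f|| termwise, and the reverse inequality
   from ||f|| = ||c^-1 (c f)|| when c <> 0. *)
Lemma fnorm_scal c (f : fn A) : FVL f -> fnorm (fscal c f) = Rabs c * fnorm f.
Proof.
  intro Hf. apply Rle_antisym.
  - apply fnorm_le; [apply FVL_scal, Hf|]. intros nu Hn. pose proof Hn as [[_ [Hs _]] _].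
    rewrite Hs by exact Hf. apply Rmult_le_compat_l; [apply Rabs_pos|]. apply fnorm_ge; assumption.
  - destruct (Req_dec c 0) as [->|Hc].
    + rewrite Rabs_R0, Rmult_0_l. apply fnorm_nonneg, FVL_scal, Hf.
    + assert (Hca : 0 < Rabs c) by (apply Rabs_pos_lt, Hc).
      assert (fnorm f <= fnorm (fscal c f) / Rabs c).
      { apply fnorm_le; [exact Hf|]. intros nu Hn. pose proof Hn as [[_ [Hs _]] _].
        pose proof (fnorm_ge nu _ Hn (FVL_scal c f Hf)) as H. rewrite Hs in H by exact Hf.
        apply (Rmult_le_reg_l (Rabs c)); [exact Hca|].
        replace (Rabs c * (fnorm (fscal c f) / Rabs c)) with (fnorm (fscal c f)) by (field; lra).
        exact H. }
      replace (fnorm (fscal c f)) with (Rabs c * (fnorm (fscal c f) / Rabs c)) by (field; lra).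
      apply Rmult_le_compat_l; lra.
Qed.

Lemma fnorm_seminorm : lattice_seminorm fnorm.
Proof.
  split; [|split; [exact fnorm_scal|]].
  - intros f g Hf Hg. apply fnorm_le; [apply FVL_add; assumption|].
    intros nu Hn. pose proof Hn as [[Ht _] _].
    eapply Rle_trans; [apply Ht; assumption|].
    pose proof (fnorm_ge nu f Hn Hf). pose proof (fnorm_ge nu g Hn Hg). lra.
  - intros f g Hf Hg Hfg. apply fnorm_le; [exact Hf|]. intros nu Hn.
    pose proof Hn as [[_ [_ Hm]] _].
    eapply Rle_trans; [apply Hm; eassumption|]. apply fnorm_ge; assumption.
Qed.

Lemma fnorm_calN : in_calN fnorm.
Proof.
  split; [apply fnorm_seminorm|]. intro a. apply fnorm_le; [apply FVL_delta|].
  intros nu [_ Hd]. apply Hd.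
Qed.

Lemma fnorm_greatest (nu : fn A -> R) : lattice_seminorm nu -> (forall a, nu (delta a) <= 1) ->
  forall f, FVL f -> nu f <= fnorm f.
Proof. intros Hn Hd f Hf. apply fnorm_ge; [split; assumption|exact Hf]. Qed.

(* Nondegeneracy.  Point evaluations at points of [-1,1]^A lie in N, and a
   term only depends on finitely many variables and is positively
   homogeneous, so any point x can be rescaled into [-1,1]^A. *)
Lemma point_eval_calN (y : A -> R) :
  (forall a, Rabs (y a) <= 1) -> in_calN (fun g : fn A => Rabs (g y)).
Proof.
  intro Hy. split; [split; [|split]|].
  - intros; apply Rabs_triang.
  - intros; apply Rabs_mult.
  - intros f1 g1 _ _ H. apply H.
  - intro a. apply Hy.
Qed.

Fixpoint term_vars (t : lterm A) : list A :=
  match t with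
  | TVar a => [a]
  | TZero => []
  | TAdd t1 t2 => term_vars t1 ++ term_vars t2
  | TScal _ t => term_vars t
  | TJoin t1 t2 => term_vars t1 ++ term_vars t2
  end.
Lemma term_fun_local t x x' :
  (forall a, In a (term_vars t) -> x a = x' a) -> term_fun t x = term_fun t x'.
Proof.
  unfold term_fun. induction t as [a| |t1 IH1 t2 IH2|c t IH|t1 IH1 t2 IH2]; simpl; intro H.
  - apply H; left; reflexivity.
  - reflexivity.
  - rewrite IH1, IH2; auto; intros; apply H; apply in_or_app; auto.
  - rewrite IH; auto.
  - rewrite IH1, IH2; auto; intros; apply H; apply in_or_app; auto.
Qed.
Lemma term_fun_pos_homogeneous t s x : 0 <= s -> term_fun t (fun a => s * x a) = s * term_fun t x.
Proof.
  intro Hs. unfold term_fun. induction t as [a| |t1 IH1 t2 IH2|c t IH|t1 IH1 t2 IH2]; simpl.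
  - reflexivity.
  - ring.
  - rewrite IH1, IH2. ring.
  - rewrite IH. ring.
  - rewrite IH1, IH2. symmetry. apply (join_scal Rlat s _ _ Hs).
Qed.

Definition sum_abs (x : A -> R) (l : list A) : R := fold_right (fun b acc => Rabs (x b) + acc) 0 l.
Lemma sum_abs_nonneg (x : A -> R) l : 0 <= sum_abs x l.
Proof. induction l; simpl; [lra|]. pose proof (Rabs_pos (x a)). lra. Qed.
Lemma sum_abs_ge (x : A -> R) l a : In a l -> Rabs (x a) <= sum_abs x l.
Proof.
  induction l as [|b l IH]; simpl; [intros []|]. intros [<-|H].
  - pose proof (sum_abs_nonneg x l). lra.
  - pose proof (IH H). pose proof (Rabs_pos (x b)). lra.
Qed.

(* Clipping x / M to [-1,1] with M = 1 + sum_abs x (term_vars t) changes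
   nothing on the variables of t. *)
Lemma term_fun_rescale t (x : A -> R) :
  exists M y, 0 < M /\ (forall a, Rabs (y a) <= 1) /\ term_fun t y = / M * term_fun t x.
Proof.
  set (M := 1 + sum_abs x (term_vars t)).
  assert (HM : 1 <= M) by (unfold M; pose proof (sum_abs_nonneg x (term_vars t)); lra).
  exists M, (fun a => Rmax (-1) (Rmin 1 (x a / M))). split; [lra|]. split.
  { intro a. unfold Rabs, Rmax, Rmin. destruct_minmax; lra. }
  rewrite <- term_fun_pos_homogeneous by (left; apply Rinv_0_lt_compat; lra).
  apply term_fun_local. intros a Ha.
  assert (Hs : Rabs (x a) < M) by (pose proof (sum_abs_ge x _ a Ha); unfold M; lra).
  assert (Hu : x a / M < 1 /\ - 1 < x a / M).
  { apply Rabs_def2. unfold Rdiv. rewrite Rabs_mult, Rabs_inv, (Rabs_pos_eq M) by lra.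
    apply (Rmult_lt_reg_r M); [lra|]. rewrite Rmult_assoc, Rinv_l by lra. lra. }
  replace (/ M * x a) with (x a / M) by (unfold Rdiv; ring).
  unfold Rmax, Rmin. destruct (Rle_dec 1 (x a / M)); [lra|].
  destruct (Rle_dec (-1) (x a / M)); lra.
Qed.

Lemma fnorm_nondeg (f : fn A) : FVL f -> fnorm f = 0 -> f = fzero.
Proof.
  intros Hf H0. destruct (FVL_term f Hf) as [t ->].
  extensionality x. unfold fzero.
  destruct (term_fun_rescale t x) as [M [y [HM [Hy Ht]]]].
  pose proof (fnorm_ge _ _ (point_eval_calN y Hy) Hf) as Hge.
  rewrite H0, Ht, Rabs_mult, Rabs_inv, (Rabs_pos_eq M) in Hge by lra.
  assert (HiM : 0 < / M) by (apply Rinv_0_lt_compat, HM).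
  destruct (Req_dec (term_fun t x) 0) as [|Hne]; [assumption|].
  pose proof (Rabs_pos_lt _ Hne). nra.
Qed.

End FreeNorm.

Section BanachLatticeNorm.
Variable Z : BanachLattice.
Local Notation sub u v := (bl_add u (bl_opp v)).
Local Notation nm := (@bl_norm Z).
Definition labs (z : Z) : Z := bl_join z (bl_opp z).

Lemma norm_opp (x : Z) : nm (bl_opp x) = nm x.
Proof. rewrite <- scalN1, bl_norm_scal, Rabs_m1. ring. Qed.
Lemma norm_zero : nm bl_zero = 0.
Proof. rewrite <- (scal0 Z bl_zero), bl_norm_scal, Rabs_R0. ring. Qed.
Lemma norm_nonneg (x : Z) : 0 <= nm x.
Proof.
  pose proof (bl_norm_triangle Z x (bl_opp x)) as H. rewrite bl_addN, norm_zero, norm_opp in H. lra.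
Qed.
Lemma ndist_sym (u v : Z) : nm (sub u v) = nm (sub v u).
Proof.
  rewrite <- (norm_opp (sub v u)), opp_add, oppK, bl_addC. reflexivity.
Qed.
Lemma sub_split (u v w : Z) : sub u w = bl_add (sub u v) (sub v w).
Proof.
  rewrite bl_addA, <- (bl_addA _ u), addNl, bl_add0. reflexivity.
Qed.
Lemma ndist_tri (u v w : Z) : nm (sub u w) <= nm (sub u v) + nm (sub v w).
Proof. rewrite (sub_split u v w). apply bl_norm_triangle. Qed.
Lemma sub_add (x x' a b : Z) : sub (bl_add x x') (bl_add a b) = bl_add (sub x a) (sub x' b).
Proof.
  rewrite opp_add, !bl_addA. f_equal. rewrite <- !bl_addA. f_equal. apply bl_addC.
Qed.
Lemma ndist_add (x x' a b : Z) :
  nm (sub (bl_add x x') (bl_add a b)) <= nm (sub x a) + nm (sub x' b).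
Proof. rewrite sub_add. apply bl_norm_triangle. Qed.
Lemma ndist_scal c (x a : Z) : nm (sub (bl_scal c x) (bl_scal c a)) = Rabs c * nm (sub x a).
Proof. rewrite <- scal_sub, bl_norm_scal. reflexivity. Qed.
Lemma sub_eq0 (u v : Z) : nm (sub u v) = 0 -> u = v.
Proof.
  intro H. apply bl_norm_eq0 in H. apply opp_unique in H.
  rewrite <- (oppK Z u), <- H, oppK. reflexivity.
Qed.
Lemma sub_self (u : Z) : sub u u = bl_zero.
Proof. apply bl_addN. Qed.

Lemma labs_nonneg (z : Z) : bl_le bl_zero (labs z).
Proof.
  apply (le_scal_inv Z 2); [lra|]. rewrite scal_zero.
  replace 2 with (1 + 1) by ring. rewrite bl_scalDl, bl_scal1.
  rewrite <- (bl_addN Z z). apply le_add2; [apply bl_join_l|apply bl_join_r].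
Qed.
Lemma labs_of_nonneg (w : Z) : bl_le bl_zero w -> labs w = w.
Proof.
  intro H. apply bl_le_antisym.
  - apply bl_join_least. apply bl_le_refl. apply bl_le_trans with bl_zero; auto.
    rewrite <- (opp0 Z). apply le_opp, H.
  - apply bl_join_l.
Qed.
Lemma labs_opp (z : Z) : labs (bl_opp z) = labs z.
Proof. unfold labs. rewrite oppK. apply join_comm. Qed.
Lemma norm_labs (z : Z) : nm (labs z) = nm z.
Proof.
  apply Rle_antisym; apply bl_norm_lattice; fold (labs z); fold (labs (labs z));
    rewrite (labs_of_nonneg (labs z) (labs_nonneg z)); apply bl_le_refl.
Qed.
Lemma norm_mono (u w : Z) : bl_le (labs u) w -> nm u <= nm w.
Proof.
  intro H. apply bl_norm_lattice. fold (labs u). fold (labs w).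
  rewrite (labs_of_nonneg w); [exact H|].
  apply bl_le_trans with (labs u); [apply labs_nonneg|exact H].
Qed.
Lemma le_add_pos (z p : Z) : bl_le bl_zero p -> bl_le z (bl_add z p).
Proof. intro H. rewrite <- (bl_add0 Z z) at 1. apply le_add_l, H. Qed.

(* One half of Birkhoff's inequality in the order: the other half follows by
   exchanging the roles of (x, x') and (a, b). *)
Lemma birkhoff_le (x x' a b : Z) :
  bl_le (sub (bl_join x x') (bl_join a b)) (bl_add (labs (sub x a)) (labs (sub x' b))).
Proof.
  apply sub_le_of_le_add. apply bl_join_least.
  - apply bl_le_trans with (bl_add (sub x a) a).
    + rewrite <- bl_addA, addNl, bl_add0. apply bl_le_refl.
    + apply le_add2; [|apply bl_join_l].
      apply bl_le_trans with (labs (sub x a)); [apply bl_join_l|apply le_add_pos, labs_nonneg].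
  - apply bl_le_trans with (bl_add (sub x' b) b).
    + rewrite <- bl_addA, addNl, bl_add0. apply bl_le_refl.
    + apply le_add2; [|apply bl_join_r].
      rewrite (bl_addC _ (labs (sub x a))).
      apply bl_le_trans with (labs (sub x' b)); [apply bl_join_l|apply le_add_pos, labs_nonneg].
Qed.
Lemma birkhoff (x x' a b : Z) :
  nm (sub (bl_join x x') (bl_join a b)) <= nm (sub x a) + nm (sub x' b).
Proof.
  set (w := bl_add (labs (sub x a)) (labs (sub x' b))).
  apply Rle_trans with (nm w).
  - apply norm_mono. apply bl_join_least.
    + apply birkhoff_le.
    + rewrite opp_add, oppK, bl_addC.
      replace w with (bl_add (labs (sub a x)) (labs (sub b x'))).
      * apply birkhoff_le.
      * unfold w. rewrite <- (labs_opp (sub a x)), <- (labs_opp (sub b x')).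
        rewrite !opp_add, !oppK, (bl_addC _ (bl_opp a)), (bl_addC _ (bl_opp b)). reflexivity.
  - unfold w. eapply Rle_trans; [apply bl_norm_triangle|]. rewrite !norm_labs. lra.
Qed.
End BanachLatticeNorm.

Arguments term_fun {A}. Arguments fnorm {A}. Arguments labs {Z}.

Lemma inv_small eps : 0 < eps -> exists N : nat, / (INR N + 1) < eps.
Proof.
  intro He. destruct (archimed (/ eps)) as [H1 _].
  assert (Hup : (0 <= up (/ eps))%Z).
  { apply le_IZR. pose proof (Rinv_0_lt_compat eps He). simpl. lra. }
  exists (Z.to_nat (up (/ eps))). rewrite INR_IZR_INZ, Z2Nat.id by exact Hup.
  assert (0 < / eps) by (apply Rinv_0_lt_compat, He).
  replace eps with (/ / eps) at 2 by (field; lra).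
  apply Rinv_lt_contravar; [apply Rmult_lt_0_compat|]; lra.
Qed.
Lemma inv_mono (n N : nat) : (N <= n)%nat -> / (INR n + 1) <= / (INR N + 1).
Proof.
  intro H. apply Rinv_le_contravar; [pose proof (pos_INR N); lra|]. apply le_INR in H. lra.
Qed.
Lemma small_zero r : 0 <= r -> (forall eps, 0 < eps -> r < eps) -> r = 0.
Proof. intros [H0|H0] H; [specialize (H r H0); lra|auto]. Qed.

Section ExtensionToFVL.
Variable A : Type.
Variable Y : BanachLattice.

(* Two terms with the same function evaluate equally in Y: apply the
   transfer principle to s1 - s2 in both directions. *)
Lemma eval_term_welldef (t1 t2 : lterm A) :
  term_fun t1 = term_fun t2 -> forall y : A -> Y, eval_term Y y t1 = eval_term Y y t2.
Proof.
  intros Et y.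
  assert (H : forall s1 s2 : lterm A, term_fun s1 = term_fun s2 ->
                bl_le (eval_term Y y s1) (eval_term Y y s2)).
  { intros s1 s2 Es. apply le_of_sub_nonpos. rewrite <- scalN1.
    apply (transfer_principle A Y (TAdd s1 (TScal (-1) s2))). intro x.
    assert (Ex := equal_f Es x). unfold term_fun in Ex. simpl. rewrite Ex. lra. }
  apply bl_le_antisym; apply H; [exact Et|symmetry; exact Et].
Qed.

Variable phi : A -> Y.
Hypothesis Hphi : forall a, bl_norm (phi a) <= 1.

Definition hat (f : fn A) : Y :=
  match excluded_middle_informative (FVL f) with
  | left H => eval_term Y phi (proj1_sig (constructive_indefinite_description _ (FVL_term A f H)))
  | right _ => bl_zero
  end.

Lemma hat_spec t : hat (term_fun t) = eval_term Y phi t.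
Proof.
  unfold hat. destruct (excluded_middle_informative _) as [H|H];
    [|exfalso; apply H, FVL_term_fun].
  destruct (constructive_indefinite_description _ _) as [t' Ht']. simpl.
  symmetry. apply eval_term_welldef, Ht'.
Qed.
Lemma hat_add f g : FVL f -> FVL g -> hat (fadd f g) = bl_add (hat f) (hat g).
Proof.
  intros Hf Hg. destruct (FVL_term A f Hf) as [t1 ->], (FVL_term A g Hg) as [t2 ->].
  change (fadd (term_fun t1) (term_fun t2)) with (term_fun (TAdd t1 t2)).
  rewrite !hat_spec. reflexivity.
Qed.
Lemma hat_scal c f : FVL f -> hat (fscal c f) = bl_scal c (hat f).
Proof.
  intros Hf. destruct (FVL_term A f Hf) as [t1 ->].
  change (fscal c (term_fun t1)) with (term_fun (TScal c t1)). rewrite !hat_spec. reflexivity.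
Qed.
Lemma hat_max f g : FVL f -> FVL g -> hat (fmax f g) = bl_join (hat f) (hat g).
Proof.
  intros Hf Hg. destruct (FVL_term A f Hf) as [t1 ->], (FVL_term A g Hg) as [t2 ->].
  change (fmax (term_fun t1) (term_fun t2)) with (term_fun (TJoin t1 t2)).
  rewrite !hat_spec. reflexivity.
Qed.
Lemma hat_delta a : hat (delta a) = phi a.
Proof. change (delta a) with (term_fun (@TVar A a)). rewrite hat_spec. reflexivity. Qed.

(* |f| <= |g| pointwise is a term inequality, so it transfers to Y. *)
Lemma hat_abs_mono f g : FVL f -> FVL g -> fabs_le f g -> bl_le (labs (hat f)) (labs (hat g)).
Proof.
  intros Hf Hg Hfg. destruct (FVL_term A f Hf) as [t1 ->], (FVL_term A g Hg) as [t2 ->].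
  rewrite !hat_spec. unfold labs. apply le_of_sub_nonpos. rewrite <- !scalN1.
  apply (transfer_principle A Y
           (TAdd (TJoin t1 (TScal (-1) t1)) (TScal (-1) (TJoin t2 (TScal (-1) t2))))).
  intro x. specialize (Hfg x). unfold term_fun in Hfg. simpl. revert Hfg.
  unfold Rabs, Rmax. destruct_minmax; intros; lra.
Qed.

(* f |-> ||hat f|| is a lattice seminorm in N, hence below ||.||. *)
Lemma hat_norm f : FVL f -> bl_norm (hat f) <= fnorm f.
Proof.
  intro Hf. apply (fnorm_greatest A (fun g => bl_norm (hat g))); [| |exact Hf].
  - split; [|split].
    + intros f1 g1 H1 H2. rewrite hat_add by assumption. apply bl_norm_triangle.
    + intros c f1 H1. rewrite hat_scal by assumption. apply bl_norm_scal.
    + intros f1 g1 H1 H2 H. apply bl_norm_lattice. apply hat_abs_mono; assumption.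
  - intro a. rewrite hat_delta. apply Hphi.
Qed.

(* Part (ii), second half: extension to a completion (X, J) of
   (FVL(A), ||.||).  approx x y says that x and y are simultaneously
   approximated by J f and hat f for one f in FVL(A); it is the graph of
   the extension. *)
Section ExtensionToCompletion.
Variable X : BanachLattice.
Variable J : fn A -> X.
Hypothesis HJ : is_completion fnorm X J.

Local Notation sub u v := (bl_add u (bl_opp v)).

Lemma hat_dist f g :
  FVL f -> FVL g -> bl_norm (sub (hat f) (hat g)) <= bl_norm (sub (J f) (J g)).
Proof.
  intros Hf Hg. destruct HJ as [Jadd [Jscal [_ [Jnorm _]]]].
  rewrite <- !scalN1, <- hat_scal, <- hat_add, <- Jscal, <- Jadd by
    (try apply FVL_scal; assumption).
  rewrite Jnorm by (apply FVL_add; [|apply FVL_scal]; assumption).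
  apply hat_norm. apply FVL_add; [|apply FVL_scal]; assumption.
Qed.

Definition approx (x : X) (y : Y) : Prop :=
  forall eps, 0 < eps ->
    exists f, FVL f /\ bl_norm (sub x (J f)) < eps /\ bl_norm (sub y (hat f)) < eps.

(* approx is functional because hat is 1-Lipschitz. *)
Lemma approx_functional x y y' : approx x y -> approx x y' -> y = y'.
Proof.
  intros H1 H2. apply sub_eq0. apply small_zero; [apply norm_nonneg|].
  intros eps He. destruct (H1 (eps / 5)) as [f [Hf [Hf1 Hf2]]]; [lra|].
  destruct (H2 (eps / 5)) as [g [Hg [Hg1 Hg2]]]; [lra|].
  pose proof (ndist_tri Y y (hat f) y') as T1.
  pose proof (ndist_tri Y (hat f) (hat g) y') as T2.
  pose proof (hat_dist f g Hf Hg) as T3.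
  pose proof (ndist_tri X (J f) x (J g)) as T4.
  rewrite (ndist_sym X (J f) x) in T4. rewrite (ndist_sym Y (hat g) y') in T2.
  lra.
Qed.

(* approx is total: for J f_n -> x, (hat f_n) is Cauchy in the complete Y. *)
Lemma approx_total x : exists y, approx x y.
Proof.
  destruct HJ as [_ [_ [_ [_ Jdense]]]].
  assert (Hs : forall n : nat, exists f, FVL f /\ bl_norm (sub x (J f)) < / (INR n + 1)).
  { intro n. apply Jdense. apply Rinv_0_lt_compat. pose proof (pos_INR n). lra. }
  set (fs := fun n => proj1_sig (constructive_indefinite_description _ (Hs n))).
  assert (Hfs : forall n, FVL (fs n) /\ bl_norm (sub x (J (fs n))) < / (INR n + 1))
    by (intro n; exact (proj2_sig (constructive_indefinite_description _ (Hs n)))).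
  destruct (bl_complete Y (fun n => hat (fs n))) as [l Hl].
  - intros eps He. destruct (inv_small (eps / 2)) as [N HN]; [lra|]. exists N.
    intros n m Hn Hm. destruct (Hfs n) as [F1 D1], (Hfs m) as [F2 D2].
    pose proof (hat_dist _ _ F1 F2) as T1.
    pose proof (ndist_tri X (J (fs n)) x (J (fs m))) as T2.
    rewrite (ndist_sym X (J (fs n)) x) in T2.
    pose proof (inv_mono n N Hn). pose proof (inv_mono m N Hm). lra.
  - exists l. intros eps He. destruct (Hl eps He) as [N1 HN1].
    destruct (inv_small eps He) as [N2 HN2].
    set (n := (N1 + N2)%nat). exists (fs n). destruct (Hfs n) as [F D].
    split; [exact F|]. split.
    + pose proof (inv_mono n N2 ltac:(unfold n; lia)). lra.
    + rewrite ndist_sym. apply HN1. unfold n; lia.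
Qed.

Definition ext (x : X) : Y :=
  proj1_sig (constructive_indefinite_description _ (approx_total x)).
Lemma ext_spec x : approx x (ext x).
Proof. exact (proj2_sig (constructive_indefinite_description _ (approx_total x))). Qed.

Lemma approx_add x x' y y' : approx x y -> approx x' y' -> approx (bl_add x x') (bl_add y y').
Proof.
  destruct HJ as [Jadd _].
  intros H1 H2 eps He. destruct (H1 (eps / 2)) as [f [Hf [Hf1 Hf2]]]; [lra|].
  destruct (H2 (eps / 2)) as [g [Hg [Hg1 Hg2]]]; [lra|].
  exists (fadd f g). split; [apply FVL_add; assumption|]. split.
  - rewrite Jadd by assumption. pose proof (ndist_add X x x' (J f) (J g)). lra.
  - rewrite hat_add by assumption. pose proof (ndist_add Y y y' (hat f) (hat g)). lra.
Qed.
Lemma approx_scal c x y : approx x y -> approx (bl_scal c x) (bl_scal c y).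
Proof.
  destruct HJ as [_ [Jscal _]].
  intros H eps He. assert (Hc : 0 < Rabs c + 1) by (pose proof (Rabs_pos c); lra).
  destruct (H (eps / (Rabs c + 1))) as [f [Hf [Hf1 Hf2]]]; [apply Rdiv_lt_0_compat; lra|].
  exists (fscal c f). split; [apply FVL_scal; assumption|].
  assert (Hsmall : forall r, 0 <= r -> r < eps / (Rabs c + 1) -> Rabs c * r < eps).
  { intros r Hr Hr'. apply Rle_lt_trans with ((Rabs c + 1) * r); [pose proof (Rabs_pos c); nra|].
    replace eps with ((Rabs c + 1) * (eps / (Rabs c + 1))) by (field; lra).
    apply Rmult_lt_compat_l; lra. }
  split.
  - rewrite Jscal, ndist_scal by assumption. apply Hsmall; [apply norm_nonneg|exact Hf1].
  - rewrite hat_scal, ndist_scal by assumption. apply Hsmall; [apply norm_nonneg|exact Hf2].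
Qed.
Lemma approx_join x x' y y' :
  approx x y -> approx x' y' -> approx (bl_join x x') (bl_join y y').
Proof.
  destruct HJ as [_ [_ [Jmax _]]].
  intros H1 H2 eps He. destruct (H1 (eps / 2)) as [f [Hf [Hf1 Hf2]]]; [lra|].
  destruct (H2 (eps / 2)) as [g [Hg [Hg1 Hg2]]]; [lra|].
  exists (fmax f g). split; [apply FVL_max; assumption|]. split.
  - rewrite Jmax by assumption. pose proof (birkhoff X x x' (J f) (J g)). lra.
  - rewrite hat_max by assumption. pose proof (birkhoff Y y y' (hat f) (hat g)). lra.
Qed.
Lemma approx_norm x y : approx x y -> bl_norm y <= bl_norm x.
Proof.
  destruct HJ as [_ [_ [_ [Jnorm _]]]].
  intro H. apply Rnot_lt_le. intro Hlt.
  set (eps := (bl_norm y - bl_norm x) / 4).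
  destruct (H eps) as [f [Hf [Hf1 Hf2]]]; [unfold eps; lra|].
  pose proof (ndist_tri Y y (hat f) bl_zero) as T1.
  rewrite opp0, !bl_add0 in T1.
  pose proof (hat_norm f Hf) as T2. rewrite <- Jnorm in T2 by exact Hf.
  pose proof (ndist_tri X (J f) x bl_zero) as T3. rewrite opp0, !bl_add0 in T3.
  rewrite ndist_sym in T3. unfold eps in *. lra.
Qed.
Lemma approx_delta a : approx (J (delta a)) (phi a).
Proof.
  intros eps He. exists (delta a). split; [apply FVL_delta|].
  rewrite hat_delta, !sub_self, !norm_zero. lra.
Qed.

Lemma ext_hom : lattice_hom ext.
Proof.
  split; [|split].
  - intros x y. symmetry. apply (approx_functional (bl_add x y));
      [apply approx_add; apply ext_spec|apply ext_spec].
  - intros c x. symmetry. apply (approx_functional (bl_scal c x));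
      [apply approx_scal, ext_spec|apply ext_spec].
  - intros x y. symmetry. apply (approx_functional (bl_join x y));
      [apply approx_join; apply ext_spec|apply ext_spec].
Qed.
Lemma ext_norm : norm_le1 ext.
Proof. intro x. apply approx_norm, ext_spec. Qed.
Lemma ext_delta a : ext (J (delta a)) = phi a.
Proof. apply (approx_functional (J (delta a))); [apply ext_spec|apply approx_delta]. Qed.

(* A lattice homomorphism agreeing with phi on A agrees with hat on FVL(A):
   the set of f where T (J f) = hat f is a vector sublattice containing
   the delta_a. *)
Lemma hom_agrees_on_FVL (T : X -> Y) :
  lattice_hom T -> (forall a, T (J (delta a)) = phi a) ->
  forall f, FVL f -> T (J f) = hat f.
Proof.
  intros [Hadd [Hscal Hjoin]] Hd f Hf.
  destruct HJ as [Jadd [Jscal [Jmax _]]].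
  enough (HS : FVL f /\ T (J f) = hat f) by exact (proj2 HS).
  apply (Hf (fun f => FVL f /\ T (J f) = hat f));
    [|intro a; split; [apply FVL_delta|rewrite hat_delta; apply Hd]].
  assert (Emin : forall f1 g1 : fn A,
             fmin f1 g1 = fscal (-1) (fmax (fscal (-1) f1) (fscal (-1) g1))).
  { intros f1 g1. unfold fmin, fscal, fmax. extensionality z. unfold Rmin, Rmax.
    destruct_minmax; lra. }
  split; [|split; [|split; [|split]]].
  - split; [apply FVL_zero|].
    rewrite <- (fzero_scal A fzero), Jscal, Hscal, hat_scal by apply FVL_zero.
    rewrite !scal0. reflexivity.
  - intros f1 g1 [F1 E1] [F2 E2]. split; [apply FVL_add; assumption|].
    rewrite Jadd, Hadd, hat_add, E1, E2 by assumption. reflexivity.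
  - intros c f1 [F1 E1]. split; [apply FVL_scal; assumption|].
    rewrite Jscal, Hscal, hat_scal, E1 by assumption. reflexivity.
  - intros f1 g1 [F1 E1] [F2 E2]. split; [apply FVL_max; assumption|].
    rewrite Jmax, Hjoin, hat_max, E1, E2 by assumption. reflexivity.
  - intros f1 g1 [F1 E1] [F2 E2].
    assert (G1 : FVL (fscal (-1) f1)) by (apply FVL_scal; assumption).
    assert (G2 : FVL (fscal (-1) g1)) by (apply FVL_scal; assumption).
    rewrite Emin. split; [apply FVL_scal, FVL_max; assumption|].
    rewrite Jscal, Hscal, hat_scal by (try apply FVL_max; assumption).
    rewrite Jmax, Hjoin, hat_max by assumption.
    rewrite !Jscal, !Hscal, !hat_scal, E1, E2 by assumption. reflexivity.
Qed.

(* Uniqueness: such a T of norm <= 1 is approximated by hat on the dense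
   image of J, so its graph is contained in approx. *)
Lemma ext_unique (T : X -> Y) :
  lattice_hom T /\ norm_le1 T /\ (forall a, T (J (delta a)) = phi a) -> forall x, T x = ext x.
Proof.
  intros [Hhom [Hn Hd]] x.
  pose proof (hom_agrees_on_FVL T Hhom Hd) as HTJ.
  destruct Hhom as [Hadd [Hscal _]]. destruct HJ as [_ [_ [_ [_ Jdense]]]].
  apply (approx_functional x); [|apply ext_spec].
  intros eps He. destruct (Jdense x eps He) as [f [Hf Hf1]].
  exists f. split; [exact Hf|]. split; [exact Hf1|].
  rewrite <- HTJ by exact Hf.
  rewrite <- scalN1, <- Hscal, <- Hadd, scalN1. eapply Rle_lt_trans; [apply Hn|exact Hf1].
Qed.

End ExtensionToCompletion.
End ExtensionToFVL.

Theorem mainTheorem1 (A : Type) (HA : inhabited A) :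
  exists nrm : fn A -> R,
    (* (i) ||f|| = sup_{nu in N} nu(f) is a (finite) real number *)
    (forall f, FVL f ->
       is_lub (fun r => exists nu, in_calN nu /\ r = nu f) (nrm f)) /\
    lattice_norm nrm /\
    in_calN nrm /\
    (forall nu, lattice_seminorm nu -> (forall a, nu (delta a) <= 1) ->
       forall f, FVL f -> nu f <= nrm f) /\
    (* (ii) every completion of (FVL(A), ||.||) is a free Banach lattice over A *)
    (forall (X : BanachLattice) (J : fn A -> X),
       is_completion nrm X J -> is_FBL X (fun a => J (delta a))).
Proof.
  exists (@fnorm A). split; [|split; [|split; [|split]]].
  - apply fnorm_lub.
  - split; [apply fnorm_seminorm|apply fnorm_nondeg].
  - apply fnorm_calN.
  - apply fnorm_greatest.
  - intros X J HJ Y phi Hphi. exists (ext A Y phi Hphi X J HJ). split.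
    + split; [apply ext_hom|]. split; [apply ext_norm|apply ext_delta].
    + intros T HT. apply ext_unique, HT.
Qed.
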